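(* Let $a,b>0$, $p>1$, and let $x^*\in\mathbb{R}^2$ be fixed. If $x^*\in\mathcal{D}_p$, then its metric projection onto $\mathcal{D}_p$ is $x^*$. Otherwise, if $x^*\in\mathbb{R}^2\setminus\mathcal{D}_p$, then for any initial integer $k\ge 3$, the sequence $(x^n)_{n\ge1}$ generated by the algorithm described below converges to the metric projection of $x^*$ onto the superellipse $\mathcal{C}_p$ (the point of $\mathcal{C}_p$ nearest to $x^*$).
   Context: $\|(x,y)\|_p=\left(|x/a|^p+|y/b|^p\right)^{1/p}$; $\mathcal{C}_p=\{(x,y)\mid |x/a|^p+|y/b|^p=1\}$; $\mathcal{D}_p=\{(x,y)\mid |x/a|^p+|y/b|^p\le1\}=\operatorname{conv}(\mathcal{C}_p)$. Distances and metric projections are Euclidean. For an integer $m\ge3$, $\mathcal{P}_{p,m}$ is the closed polygon with vertices $P^{(m)}_t=\varphi_p\!\left(\cos\frac{2t\pi}{m},\sin\frac{2t\pi}{m}\right)$, $t=0,\dots,m-1$, where $\varphi_p(u,v)=(u,v)/\|(u,v)\|_p$, and edges $[P^{(m)}_t,P^{(m)}_{t+1}]$ (indices mod $m$); $\mathcal{Q}_{p,m}=\operatorname{conv}(\mathcal{P}_{p,m})$. Algorithm (for $x^*\notin\mathcal{D}_p$, initial $k\ge3$): Step 1: $x^1$ is the metric projection of $x^*$ onto $\mathcal{P}_{p,k}$; it lies either in the relative interior of a unique edge $[P^{(k)}_t,P^{(k)}_{t+1}]$ or equals a vertex $P^{(k)}_t$. Refinement step: given $x^n$ the projection of $x^*$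 onto $\mathcal{P}_{p,m}$ ($m=2^{n-1}k$), pass to $\mathcal{P}_{p,2m}$ with vertices $Q_l=P^{(2m)}_l$ (so $P^{(m)}_t=Q_{2t}$). If $x^n$ lies in the relative interior of the edge $[P^{(m)}_t,P^{(m)}_{t+1}]$, compute the projections of $x^*$ onto the edges $[Q_{2t},Q_{2t+1}]$ and $[Q_{2t+1},Q_{2t+2}]$; if $x^n=P^{(m)}_t$, compute the projections of $x^*$ onto $[Q_{2t-1},Q_{2t}]$ and $[Q_{2t},Q_{2t+1}]$ (indices mod $2m$). Then $x^{n+1}$ is whichever of these two projections is nearer to $x^*$; it is the metric projection of $x^*$ onto $\mathcal{P}_{p,2m}$. *)

From Stdlib Require Import Reals Lra.
Open Scope R_scope.

(* |u|^p for real p > 0, with the convention |0|^p = 0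
   (Stdlib's Rpower 0 p would give 1, hence the case split). *)
Definition abspow (u p : R) : R :=
  if Req_EM_T u 0 then 0 else Rpower (Rabs u) p.

Definition pnorm (a b p : R) (z : R * R) : R :=
  let s := abspow (fst z / a) p + abspow (snd z / b) p in
  if Req_EM_T s 0 then 0 else Rpower s (1 / p).

Definition inC (a b p : R) (z : R * R) : Prop :=
  abspow (fst z / a) p + abspow (snd z / b) p = 1.
Definition inD (a b p : R) (z : R * R) : Prop :=
  abspow (fst z / a) p + abspow (snd z / b) p <= 1.

Definition dist2 (z w : R * R) : R :=
  sqrt ((fst z - fst w) ^ 2 + (snd z - snd w) ^ 2).

Definition is_proj (S : R * R -> Prop) (x y : R * R) : Prop :=
  S y /\ forall z, S z -> dist2 x y <= dist2 x z.

Definition phi (a b p : R) (z : R * R) : R * R :=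
  (fst z / pnorm a b p z, snd z / pnorm a b p z).

Definition vertex (a b p : R) (m t : nat) : R * R :=
  phi a b p (cos (2 * INR t * PI / INR m), sin (2 * INR t * PI / INR m)).

Definition seg (A B : R * R) (z : R * R) : Prop :=
  exists s, 0 <= s <= 1 /\ z = ((1 - s) * fst A + s * fst B, (1 - s) * snd A + s * snd B).
Definition relint_seg (A B : R * R) (z : R * R) : Prop :=
  exists s, 0 < s < 1 /\ z = ((1 - s) * fst A + s * fst B, (1 - s) * snd A + s * snd B).

Definition polygon (a b p : R) (m : nat) (z : R * R) : Prop :=
  exists t, (t < m)%nat /\ seg (vertex a b p m t) (vertex a b p m (S t)) z.

Definition nearer_proj (S1 S2 : R * R -> Prop) (x y : R * R) : Prop :=
  exists y1 y2, is_proj S1 x y1 /\ is_proj S2 x y2 /\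
    ((y = y1 /\ dist2 x y1 <= dist2 x y2) \/ (y = y2 /\ dist2 x y2 <= dist2 x y1)).

(* one refinement step of the algorithm: from x^n (projection onto P_{p,m})
   to x^{n+1}, with Q_l = P^{(2m)}_l. Index 2t-1 (mod 2m) is written 2t+2m-1. *)
Definition refine_step (a b p : R) (m : nat) (xs xn xn1 : R * R) : Prop :=
  let Q := vertex a b p (2 * m) in
  (forall t, (t < m)%nat ->
     relint_seg (vertex a b p m t) (vertex a b p m (S t)) xn ->
     nearer_proj (seg (Q (2 * t)%nat) (Q (2 * t + 1)%nat))
                 (seg (Q (2 * t + 1)%nat) (Q (2 * t + 2)%nat)) xs xn1) /\
  (forall t, (t < m)%nat ->
     xn = vertex a b p m t ->
     nearer_proj (seg (Q (2 * t + 2 * m - 1)%nat) (Q (2 * t)%nat))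
                 (seg (Q (2 * t)%nat) (Q (2 * t + 1)%nat)) xs xn1).

Definition converges (x : nat -> R * R) (y : R * R) : Prop :=
  forall eps, 0 < eps -> exists N, forall n, (N <= n)%nat -> dist2 (x n) y < eps.

From Stdlib Require Import Reals Lra Lia Psatz Arith Classical.
Open Scope R_scope.

(* Write [F(x, y) = |x/a|^p + |y/b|^p]; it is strictly convex for [p > 1], so the
   polygon [P_{p,m}] inscribed in [C_p = {F = 1}] bounds a convex polygon [Q_{p,m}]
   (described by the half-planes of its edges) contained in [D_p], and [Q_{p,m}] is
   contained in [Q_{p,2m}].  For [x*] outside [D_p] the projection [w] of [x*] onto
   [P_{p,m}] is also its projection onto [Q_{p,m}]: a point of [Q_{p,m}] closer to [x*]
   could be slid towards [x*] until it meets [P_{p,m}].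

   If [w] is interior to an edge, [x* - w] is an outer
   normal of that edge, so [w] is nearest in the inner half-plane, which contains every
   edge of [P_{p,2m}] except the two replacing the edge; the ray from [w] towards [x*]
   crosses one of those.  If [w] is a vertex, every other vertex of [P_{p,2m}] lies in
   the obtuse cone at [w], and the two edges adjacent to the new ones are handled by
   the fact that consecutive chords of the angular grid make an acute angle, which
   follows from monotonicity of the arc in each quadrant.

   Since [x^n] lies in every later [Q_{p,m'}], the obtuse angle gives
   [|x* - x^n'|^2 + |x^n - x^n'|^2 <= |x* - x^n|^2], so [(x^n)] is Cauchy.  Its limit is
   at least as close to [x*] as every vertex of every [P_{p,m}], hence as every point
   of [C_p], and it lies on [C_p], since otherwise the segment from it to [x*] would
   cross [C_p] closer to [x*]. *)

(** * The function [|u|^p] *)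


Lemma Rpower_gt_Bernoulli (p s : R) : 1 < p -> 0 < s -> s <> 1 ->
  1 + p * (s - 1) < Rpower s p.
Proof.
  intros hp hs hs1. unfold Rpower.
  (* [s^p = s e^((p-1) L) > s (1 + (p-1) L)] and [s L >= s - 1], where [L = ln s]. *)
  set (L := ln s).
  assert (He : exp L = s) by (apply exp_ln; exact hs).
  assert (hL : L <> 0) by (intro E; apply hs1; rewrite <- He, E; apply exp_0).
  assert (Hsplit : exp (p * L) = s * exp ((p - 1) * L)) by (rewrite <- He, <- exp_plus; f_equal; ring).
  assert (Htan : 1 + (p - 1) * L < exp ((p - 1) * L)).
  { apply exp_ineq1. intro E. apply Rmult_integral in E. destruct E; lra. }
  assert (Hinv : s * (1 - L) <= 1).
  { assert (H := exp_ineq1_le (- L)).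
    assert (E : s * exp (- L) = 1) by (rewrite <- He, <- exp_plus, Rplus_opp_r; apply exp_0).
    nra. }
  rewrite Hsplit.
  assert (s * (1 + (p - 1) * L) < s * exp ((p - 1) * L)) by (apply Rmult_lt_compat_l; lra).
  nra.
Qed.

Lemma Rdiv_ge0 x y : 0 <= x -> 0 < y -> 0 <= x / y.
Proof. intros. unfold Rdiv. apply Rmult_le_pos; auto. left; apply Rinv_0_lt_compat; auto. Qed.

Lemma Rdiv_le_1 x y : x <= y -> 0 < y -> x / y <= 1.
Proof. intros. apply Rmult_le_reg_r with y; auto. unfold Rdiv. rewrite Rmult_assoc, Rinv_l by lra. lra. Qed.

Lemma Rdiv_lt_1 x y : x < y -> 0 < y -> x / y < 1.
Proof. intros. apply Rmult_lt_reg_r with y; auto. unfold Rdiv. rewrite Rmult_assoc, Rinv_l by lra. lra. Qed.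

Section Abspow.
Variable p : R.
Hypothesis hp : 1 < p.

Lemma abspow_0 : abspow 0 p = 0.
Proof. unfold abspow. destruct (Req_EM_T 0 0); [reflexivity | congruence]. Qed.

Lemma abspow_nz u : u <> 0 -> abspow u p = Rpower (Rabs u) p.
Proof. intro. unfold abspow. destruct (Req_EM_T u 0); [congruence | reflexivity]. Qed.

Lemma abspow_pos u : u <> 0 -> 0 < abspow u p.
Proof. intro. rewrite abspow_nz by auto. apply exp_pos. Qed.

Lemma abspow_ge0 u : 0 <= abspow u p.
Proof. destruct (Req_EM_T u 0); [subst; rewrite abspow_0; lra | left; apply abspow_pos; auto]. Qed.

Lemma abspow_Rabs u : abspow (Rabs u) p = abspow u p.
Proof.
  destruct (Req_EM_T u 0); [subst; rewrite Rabs_R0; reflexivity |].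
  rewrite !abspow_nz, Rabs_Rabsolu; auto. apply Rabs_no_R0; auto.
Qed.

Lemma abspow_opp u : abspow (- u) p = abspow u p.
Proof. rewrite <- abspow_Rabs, Rabs_Ropp, abspow_Rabs. reflexivity. Qed.

Lemma abspow_1 : abspow 1 p = 1.
Proof. rewrite abspow_nz, Rabs_R1 by lra. unfold Rpower. rewrite ln_1, Rmult_0_r. apply exp_0. Qed.

Lemma abspow_scale c u : 0 < c -> abspow (c * u) p = Rpower c p * abspow u p.
Proof.
  intro hc. destruct (Req_EM_T u 0).
  - subst. rewrite Rmult_0_r, abspow_0. ring.
  - rewrite !abspow_nz, Rabs_mult, Rabs_pos_eq by (try apply Rmult_integral_contrapositive; lra).
    symmetry; apply Rpower_mult_distr; auto. apply Rabs_pos_lt; auto.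
Qed.

Lemma abspow_lt u v : 0 <= u -> u < v -> abspow u p < abspow v p.
Proof.
  intros hu huv. destruct (Req_EM_T u 0).
  - subst. rewrite abspow_0. apply abspow_pos; lra.
  - rewrite !abspow_nz, !Rabs_pos_eq by lra. apply Rlt_Rpower_l; lra.
Qed.

Lemma abspow_le u v : 0 <= u -> u <= v -> abspow u p <= abspow v p.
Proof. intros. destruct (Req_dec u v); [subst; lra | left; apply abspow_lt; lra]. Qed.

(* [p * c^p / c] is the derivative of [w |-> w^p] at [c]. *)
Lemma abspow_tangent_strict c w : 0 < c -> 0 <= w -> w <> c ->
  abspow c p + (p * abspow c p / c) * (w - c) < abspow w p.
Proof.
  intros hc hw hwc.
  assert (Hc : 0 < abspow c p) by (apply abspow_pos; lra).
  destruct (Req_dec w 0) as [->|hw0].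
  - rewrite abspow_0.
    replace (abspow c p + p * abspow c p / c * (0 - c)) with ((1 - p) * abspow c p) by (field; lra).
    nra.
  - set (s := w / c).
    assert (hs : 0 < s) by (apply Rdiv_lt_0_compat; lra).
    assert (hs1 : s <> 1) by (intro E; apply hwc; unfold s in E; field_simplify_eq in E; lra).
    replace w with (c * s) by (unfold s; field; lra).
    rewrite abspow_scale, (abspow_nz s), (abspow_nz c), !Rabs_pos_eq by lra.
    rewrite (abspow_nz c), Rabs_pos_eq in Hc by lra.
    replace (Rpower c p + p * Rpower c p / c * (c * s - c)) with (Rpower c p * (1 + p * (s - 1))) by (field; lra).
    apply Rmult_lt_compat_l; [lra | apply Rpower_gt_Bernoulli; auto].
Qed.

Lemma abspow_tangent c w : 0 < c -> 0 <= w ->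
  abspow c p + (p * abspow c p / c) * (w - c) <= abspow w p.
Proof.
  intros hc hw. destruct (Req_dec w c) as [->|hwc]; [lra |].
  left; apply abspow_tangent_strict; auto.
Qed.

Lemma abspow_convex_nonneg u v t : 0 <= u -> 0 <= v -> 0 <= t <= 1 ->
  abspow ((1 - t) * u + t * v) p <= (1 - t) * abspow u p + t * abspow v p.
Proof.
  intros hu hv ht.
  set (c := (1 - t) * u + t * v).
  assert (Hu := abspow_ge0 u). assert (Hv := abspow_ge0 v).
  destruct (Req_dec c 0) as [Hc|Hc]; [rewrite Hc, abspow_0; nra |].
  assert (hc : 0 < c) by (unfold c in *; nra).
  assert (T1 := abspow_tangent c u hc hu). assert (T2 := abspow_tangent c v hc hv).
  set (K := p * abspow c p / c) in *.
  assert ((1 - t) * (abspow c p + K * (u - c)) + t * (abspow c p + K * (v - c)) = abspow c p)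
    by (clearbody K; unfold c; ring).
  nra.
Qed.

Lemma abspow_strict_convex_nonneg u v t : 0 <= u -> 0 <= v -> 0 < t < 1 -> u <> v ->
  abspow ((1 - t) * u + t * v) p < (1 - t) * abspow u p + t * abspow v p.
Proof.
  intros hu hv ht huv.
  set (c := (1 - t) * u + t * v).
  assert (hc : 0 < c) by (unfold c in *; destruct (Req_dec u 0); destruct (Req_dec v 0); nra).
  assert (hcu : u <> c) by (unfold c; intro; apply huv; nra).
  assert (T1 := abspow_tangent_strict c u hc hu hcu). assert (T2 := abspow_tangent c v hc hv).
  set (K := p * abspow c p / c) in *.
  assert ((1 - t) * (abspow c p + K * (u - c)) + t * (abspow c p + K * (v - c)) = abspow c p)
    by (clearbody K; unfold c; ring).
  nra.
Qed.

Lemma abspow_convex u v t : 0 <= t <= 1 ->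
  abspow ((1 - t) * u + t * v) p <= (1 - t) * abspow u p + t * abspow v p.
Proof.
  intros ht.
  rewrite <- (abspow_Rabs ((1 - t) * u + t * v)), <- (abspow_Rabs u), <- (abspow_Rabs v).
  eapply Rle_trans; [| apply abspow_convex_nonneg; auto; apply Rabs_pos].
  apply abspow_le; [apply Rabs_pos |].
  eapply Rle_trans; [apply Rabs_triang |].
  rewrite !Rabs_mult, (Rabs_pos_eq t), (Rabs_pos_eq (1 - t)) by lra. lra.
Qed.

(* Either [|u| <> |v|], and strict convexity on [[0, oo)] applies, or [v = -u] and
   already the triangle inequality for [|.|] is strict. *)
Lemma abspow_strict_convex u v t : 0 < t < 1 -> u <> v ->
  abspow ((1 - t) * u + t * v) p < (1 - t) * abspow u p + t * abspow v p.
Proof.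
  intros ht huv.
  rewrite <- (abspow_Rabs ((1 - t) * u + t * v)), <- (abspow_Rabs u), <- (abspow_Rabs v).
  destruct (Req_dec (Rabs u) (Rabs v)) as [He|Hne].
  - assert (Hv : v = - u).
    { revert He; unfold Rabs; destruct (Rcase_abs u); destruct (Rcase_abs v); intros; lra. }
    subst v. assert (Hu : 0 < Rabs u) by (apply Rabs_pos_lt; intro; apply huv; subst; lra).
    rewrite Rabs_Ropp. replace ((1 - t) * u + t * - u) with ((1 - 2 * t) * u) by ring.
    eapply Rlt_le_trans.
    + apply abspow_lt with (v := Rabs u); [apply Rabs_pos |].
      rewrite Rabs_mult.
      assert (Rabs (1 - 2 * t) < 1) by (unfold Rabs; destruct (Rcase_abs (1 - 2 * t)); lra). nra.
    + replace (abspow (Rabs u) p) with ((1 - t) * abspow (Rabs u) p + t * abspow (Rabs u) p) at 1 by ring.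
      lra.
  - eapply Rle_lt_trans; [apply abspow_le; [apply Rabs_pos |] |].
    + eapply Rle_trans; [apply Rabs_triang |].
      rewrite !Rabs_mult, (Rabs_pos_eq t), (Rabs_pos_eq (1 - t)) by lra. apply Rle_refl.
    + apply abspow_strict_convex_nonneg; auto; apply Rabs_pos.
Qed.

Lemma abspow_le_self u : 0 <= u <= 1 -> abspow u p <= u.
Proof.
  intros hu. assert (H := abspow_convex_nonneg 0 1 u ltac:(lra) ltac:(lra) hu).
  rewrite abspow_0, abspow_1 in H. replace ((1 - u) * 0 + u * 1) with u in H by ring. lra.
Qed.

Lemma Rpower_le_self c : 0 < c <= 1 -> Rpower c p <= c.
Proof.
  intros hc. assert (H := abspow_le_self c ltac:(lra)). rewrite abspow_nz, Rabs_pos_eq in H by lra. exact H.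
Qed.

Lemma continuity_abspow x : continuity_pt (fun u => abspow u p) x.
Proof.
  destruct (Req_dec x 0) as [->|Hx].
  - intros eps heps. exists (Rmin 1 eps). split; [apply Rmin_pos; lra |].
    intros y [_ Hy]. simpl in *. unfold R_dist in *.
    rewrite abspow_0, Rminus_0_r in *. rewrite Rabs_pos_eq by apply abspow_ge0.
    rewrite <- abspow_Rabs. eapply Rle_lt_trans.
    + apply abspow_le_self. split; [apply Rabs_pos |]. assert (Rmin 1 eps <= 1) by apply Rmin_l. lra.
    + assert (Rmin 1 eps <= eps) by apply Rmin_r. lra.
  - apply continuity_pt_locally_ext with (f := fun u => exp (p * ln (Rabs u))) (a := Rabs x).
    + apply Rabs_pos_lt; auto.
    + intros y Hy. rewrite abspow_nz; [reflexivity |]. intros ->.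
      unfold R_dist in Hy. rewrite Rminus_0_l, Rabs_Ropp in Hy. lra.
    + apply continuity_pt_comp with (f1 := fun u => p * ln (Rabs u)) (f2 := exp).
      * apply continuity_pt_scal, continuity_pt_comp with (f1 := Rabs) (f2 := ln); [apply Rcontinuity_abs |].
        apply derivable_continuous_pt. exists (/ Rabs x). apply derivable_pt_lim_ln, Rabs_pos_lt; auto.
      * apply derivable_continuous_pt, derivable_pt_exp.
Qed.

End Abspow.

(** * Plane geometry *)

Definition cross (u v : R * R) : R := fst u * snd v - snd u * fst v.
Definition dot (u v : R * R) : R := fst u * fst v + snd u * snd v.
Definition vsub (u v : R * R) : R * R := (fst u - fst v, snd u - snd v).
Definition lincomb (l m : R) (A B : R * R) : R * R :=
  (l * fst A + m * fst B, l * snd A + m * snd B).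
Definition sqdist (x y : R * R) : R := (fst x - fst y) ^ 2 + (snd x - snd y) ^ 2.

Lemma sqdist_ge0 x y : 0 <= sqdist x y.
Proof. unfold sqdist. apply Rplus_le_le_0_compat; apply pow2_ge_0. Qed.

Lemma sqdist_eq0 x y : sqdist x y = 0 -> x = y.
Proof.
  destruct x as [x1 x2], y as [y1 y2]. unfold sqdist; cbn [fst snd]. intro H.
  rewrite <- !Rsqr_pow2 in H.
  assert (A1 := Rle_0_sqr (x1 - y1)). assert (A2 := Rle_0_sqr (x2 - y2)).
  assert (E1 : (x1 - y1)² = 0) by lra. assert (E2 : (x2 - y2)² = 0) by lra.
  apply Rsqr_eq_0 in E1, E2. f_equal; lra.
Qed.

Lemma dist2_le_iff x y z : dist2 x y <= dist2 x z <-> sqdist x y <= sqdist x z.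
Proof.
  unfold dist2. fold (sqdist x y) (sqdist x z). split; intro H.
  - rewrite <- (sqrt_sqrt (sqdist x y)), <- (sqrt_sqrt (sqdist x z)) by apply sqdist_ge0.
    apply Rmult_le_compat; auto; apply sqrt_pos.
  - apply sqrt_le_1_alt; auto.
Qed.

Lemma is_proj_sqdist (S : R * R -> Prop) x y :
  is_proj S x y <-> S y /\ forall z, S z -> sqdist x y <= sqdist x z.
Proof.
  split; intros [hy H]; split; auto; intros z hz; apply dist2_le_iff; auto.
Qed.

Lemma is_proj_self (S : R * R -> Prop) x : S x -> is_proj S x x.
Proof.
  intro hx. apply is_proj_sqdist. split; [exact hx |]. intros z _.
  unfold sqdist at 1. rewrite !Rminus_diag. replace (0 ^ 2 + 0 ^ 2) with 0 by ring. apply sqdist_ge0.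
Qed.

Lemma nearer_proj_spec (S1 S2 : R * R -> Prop) xs y : nearer_proj S1 S2 xs y ->
  (S1 y \/ S2 y) /\ (forall z, S1 z \/ S2 z -> sqdist xs y <= sqdist xs z).
Proof.
  intros [y1 [y2 [H1 [H2 Hs]]]].
  apply is_proj_sqdist in H1 as [h1 H1]. apply is_proj_sqdist in H2 as [h2 H2].
  destruct Hs as [[-> D]|[-> D]]; apply dist2_le_iff in D; split; auto; intros z [hz|hz].
  - auto.
  - eapply Rle_trans; [exact D | auto].
  - eapply Rle_trans; [exact D | auto].
  - auto.
Qed.

Lemma seg_lincomb A B z : seg A B z -> exists s, 0 <= s <= 1 /\ z = lincomb (1 - s) s A B.
Proof. exact (fun H => H). Qed.

Lemma lincomb_0 A B : lincomb (1 - 0) 0 A B = A.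
Proof. destruct A, B; unfold lincomb; simpl; f_equal; ring. Qed.

Lemma lincomb_1 A B : lincomb (1 - 1) 1 A B = B.
Proof. destruct A, B; unfold lincomb; simpl; f_equal; ring. Qed.

Lemma lincomb_swap s A B : lincomb (1 - s) s A B = lincomb (1 - (1 - s)) (1 - s) B A.
Proof. destruct A, B; unfold lincomb; simpl; f_equal; ring. Qed.

Lemma seg_left A B : seg A B A.
Proof. exists 0. split; [lra | symmetry; apply lincomb_0]. Qed.

Lemma seg_sym A B z : seg A B z -> seg B A z.
Proof. intros [s [hs ->]]. exists (1 - s). split; [lra | apply lincomb_swap]. Qed.

Lemma cross_lincomb_l l m X Y : cross X (lincomb l m X Y) = m * cross X Y.
Proof. unfold cross, lincomb; simpl; ring. Qed.

Lemma cross_lincomb_r l m X Y : cross (lincomb l m X Y) Y = l * cross X Y.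
Proof. unfold cross, lincomb; simpl; ring. Qed.

Lemma dot_lincomb A B W v s :
  dot (vsub (lincomb (1 - s) s A B) W) v = (1 - s) * dot (vsub A W) v + s * dot (vsub B W) v.
Proof. unfold dot, vsub, lincomb; simpl; ring. Qed.

Lemma sqdist_lincomb x q t : sqdist x (lincomb (1 - t) t x q) = t ^ 2 * sqdist x q.
Proof. unfold sqdist, lincomb; simpl; ring. Qed.

Lemma sqdist_expand xs W z :
  sqdist xs z = sqdist xs W - 2 * dot (vsub z W) (vsub xs W) + sqdist z W.
Proof. unfold sqdist, dot, vsub; simpl; ring. Qed.

Lemma sqdist_le_of_obtuse xs W z :
  dot (vsub z W) (vsub xs W) <= 0 -> sqdist xs W <= sqdist xs z.
Proof. intro. rewrite (sqdist_expand xs W z). generalize (sqdist_ge0 z W). lra. Qed.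

Lemma sqdist_le_seg_of_obtuse xs W A B s : 0 <= s <= 1 ->
  dot (vsub A W) (vsub xs W) <= 0 -> dot (vsub B W) (vsub xs W) <= 0 ->
  sqdist xs W <= sqdist xs (lincomb (1 - s) s A B).
Proof. intros. apply sqdist_le_of_obtuse. rewrite dot_lincomb. nra. Qed.

Lemma dot_cross_lagrange e u v :
  dot u v * dot e e = dot u e * dot v e + cross e u * cross e v.
Proof. unfold dot, cross; ring. Qed.

Lemma dot_self_pos X Y : X <> Y -> 0 < dot (vsub Y X) (vsub Y X).
Proof.
  intro hXY. destruct X as [x1 x2], Y as [y1 y2]. unfold dot, vsub; simpl.
  destruct (Req_dec y1 x1); destruct (Req_dec y2 x2); [subst; congruence | nra ..].
Qed.

Lemma collinear_lincomb X Y q : X <> Y -> cross (vsub Y X) (vsub q X) = 0 ->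
  exists nu, q = lincomb (1 - nu) nu X Y.
Proof.
  intros hXY hc. assert (hd := dot_self_pos X Y hXY).
  exists (dot (vsub q X) (vsub Y X) / dot (vsub Y X) (vsub Y X)).
  destruct X as [x1 x2], Y as [y1 y2], q as [q1 q2].
  unfold cross, dot, vsub, lincomb in *; simpl in *.
  set (D := (y1 - x1) * (y1 - x1) + (y2 - x2) * (y2 - x2)) in *.
  assert (hc1 : ((y1 - x1) * (q2 - x2) - (y2 - x2) * (q1 - x1)) * (y2 - x2) = 0) by (rewrite hc; ring).
  assert (hc2 : ((y1 - x1) * (q2 - x2) - (y2 - x2) * (q1 - x1)) * (y1 - x1) = 0) by (rewrite hc; ring).
  f_equal; apply Rmult_eq_reg_r with D; try lra; field_simplify; try lra; unfold D; lra.
Qed.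

(* At a vertex [W] with neighbours [A], [B] turning left, a point [z] on the inner
   side of both edge lines lies in the cone spanned by [A - W] and [B - W]. *)
Lemma cone_obtuse A W B z v : 0 < cross (vsub W A) (vsub B W) ->
  dot (vsub B W) v <= 0 -> dot (vsub A W) v <= 0 ->
  0 <= cross (vsub W A) (vsub z A) -> 0 <= cross (vsub B W) (vsub z W) ->
  dot (vsub z W) v <= 0.
Proof.
  destruct A as [a1 a2], W as [w1 w2], B as [b1 b2], z as [z1 z2], v as [v1 v2].
  unfold cross, dot, vsub; simpl. intros H0 H1 H2 H3 H4.
  set (c := (w1 - a1) * (b2 - w2) - (w2 - a2) * (b1 - w1)) in *.
  assert (E : c * ((z1 - w1) * v1 + (z2 - w2) * v2) =
     ((w1 - a1) * (z2 - a2) - (w2 - a2) * (z1 - a1)) * ((b1 - w1) * v1 + (b2 - w2) * v2)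
     + ((b1 - w1) * (z2 - w2) - (b2 - w2) * (z1 - w1)) * ((a1 - w1) * v1 + (a2 - w2) * v2))
    by (unfold c; ring).
  assert (c * ((z1 - w1) * v1 + (z2 - w2) * v2) <= 0) by (rewrite E; nra).
  nra.
Qed.

Lemma sqdist_acute_compare xs W M B s : 0 <= s <= 1 ->
  dot (vsub B W) (vsub xs W) <= 0 -> 0 <= dot (vsub M W) (vsub B W) ->
  sqdist xs (lincomb (1 - s) s M W) <= sqdist xs (lincomb (1 - s) s M B).
Proof.
  destruct xs as [x1 x2], W as [w1 w2], M as [m1 m2], B as [b1 b2].
  unfold sqdist, dot, vsub, lincomb; simpl. intros hs h1 h2.
  assert (E : ((x1 - ((1 - s) * m1 + s * b1)) ^ 2 + (x2 - ((1 - s) * m2 + s * b2)) ^ 2)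
            - ((x1 - ((1 - s) * m1 + s * w1)) ^ 2 + (x2 - ((1 - s) * m2 + s * w2)) ^ 2)
    = - 2 * s * ((b1 - w1) * (x1 - w1) + (b2 - w2) * (x2 - w2))
      + 2 * s * (1 - s) * ((m1 - w1) * (b1 - w1) + (m2 - w2) * (b2 - w2))
      + s ^ 2 * ((b1 - w1) ^ 2 + (b2 - w2) ^ 2)) by ring.
  assert (0 <= s * (1 - s)) by nra.
  assert (0 <= s ^ 2 * ((b1 - w1) ^ 2 + (b2 - w2) ^ 2))
    by (apply Rmult_le_pos; [apply pow2_ge_0 | apply Rplus_le_le_0_compat; apply pow2_ge_0]).
  nra.
Qed.

Definition coord_converges (x : nat -> R * R) (y : R * R) : Prop :=
  forall eps, 0 < eps -> exists N, forall n, (N <= n)%nat ->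
    Rabs (fst (x n) - fst y) < eps /\ Rabs (snd (x n) - snd y) < eps.

Lemma converges_of_coord x y : coord_converges x y -> converges x y.
Proof.
  intros Hc eps he. destruct (Hc (eps / 2) ltac:(lra)) as [N HN]. exists N. intros n hn.
  destruct (HN n hn) as [c1 c2]. unfold dist2.
  set (u := fst (x n) - fst y) in *. set (v := snd (x n) - snd y) in *.
  apply Rle_lt_trans with (Rabs u + Rabs v); [| lra].
  rewrite <- (sqrt_Rsqr (Rabs u + Rabs v)) by (generalize (Rabs_pos u) (Rabs_pos v); lra).
  apply sqrt_le_1_alt. unfold Rsqr. rewrite <- (pow2_abs u), <- (pow2_abs v).
  generalize (Rabs_pos u) (Rabs_pos v). nra.
Qed.

Lemma sqdist_continuous xs P eps : 0 < eps -> exists rho, 0 < rho /\ forall Q,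
  Rabs (fst Q - fst P) < rho -> Rabs (snd Q - snd P) < rho -> Rabs (sqdist xs Q - sqdist xs P) < eps.
Proof.
  intro he.
  set (K := 2 * Rabs (fst P - fst xs) + 2 * Rabs (snd P - snd xs) + 3).
  assert (hK : 0 < K) by (unfold K; generalize (Rabs_pos (fst P - fst xs)) (Rabs_pos (snd P - snd xs)); lra).
  set (rho := Rmin 1 (eps / K)).
  assert (hrho : 0 < rho) by (apply Rmin_pos; [lra | apply Rdiv_lt_0_compat; lra]).
  assert (r1 : rho <= 1) by apply Rmin_l.
  assert (rK : rho * K <= eps).
  { assert (rho <= eps / K) by apply Rmin_r.
    apply Rmult_le_reg_r with (/ K); [apply Rinv_0_lt_compat; lra |].
    rewrite Rmult_assoc, Rinv_r by lra. unfold Rdiv in *. lra. }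
  exists rho. split; [exact hrho |]. intros Q h1 h2.
  set (u := fst Q - fst P) in *. set (v := snd Q - snd P) in *.
  replace (sqdist xs Q - sqdist xs P) with (u * (u + 2 * (fst P - fst xs)) + v * (v + 2 * (snd P - snd xs)))
    by (unfold u, v, sqdist; ring).
  eapply Rle_lt_trans; [apply Rabs_triang |]. rewrite !Rabs_mult.
  assert (Rabs (u + 2 * (fst P - fst xs)) <= 1 + 2 * Rabs (fst P - fst xs)).
  { eapply Rle_trans; [apply Rabs_triang |]. rewrite Rabs_mult, (Rabs_pos_eq 2) by lra. lra. }
  assert (Rabs (v + 2 * (snd P - snd xs)) <= 1 + 2 * Rabs (snd P - snd xs)).
  { eapply Rle_trans; [apply Rabs_triang |]. rewrite Rabs_mult, (Rabs_pos_eq 2) by lra. lra. }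
  assert (Rabs u * Rabs (u + 2 * (fst P - fst xs)) <= rho * (1 + 2 * Rabs (fst P - fst xs)))
    by (apply Rmult_le_compat; try apply Rabs_pos; lra).
  assert (Rabs v * Rabs (v + 2 * (snd P - snd xs)) <= rho * (1 + 2 * Rabs (snd P - snd xs)))
    by (apply Rmult_le_compat; try apply Rabs_pos; lra).
  unfold K in rK. nra.
Qed.

Lemma continuity_pt_eps f x0 : continuity_pt f x0 -> forall eps, 0 < eps ->
  exists del, 0 < del /\ forall y, Rabs (y - x0) < del -> Rabs (f y - f x0) < eps.
Proof.
  intros H eps he. destruct (H eps he) as [del [hd Hd]]. exists del. split; auto.
  intros y hy. destruct (Req_dec y x0) as [->|hne]; [rewrite Rminus_diag, Rabs_R0; auto |].
  apply (Hd y). repeat split; auto.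
Qed.

(** * Projections onto a segment *)

Lemma first_order_dir xs w d e0 : 0 < e0 ->
  (forall e, 0 < e <= e0 -> sqdist xs w <= sqdist xs (lincomb 1 e w d)) ->
  dot d (vsub xs w) <= 0.
Proof.
  intros he0 H.
  destruct (Rle_lt_dec (dot d (vsub xs w)) 0) as [h|h]; auto. exfalso.
  set (hh := dot d (vsub xs w)) in *.
  set (DD := fst d ^ 2 + snd d ^ 2).
  assert (hD : 0 <= DD) by (unfold DD; nra).
  set (e := Rmin e0 (hh / (DD + 1))).
  assert (he : 0 < e) by (apply Rmin_pos; [lra | apply Rdiv_lt_0_compat; lra]).
  assert (he2 : e * (DD + 1) <= hh).
  { assert (e <= hh / (DD + 1)) by apply Rmin_r.
    apply Rmult_le_reg_r with (/ (DD + 1)); [apply Rinv_0_lt_compat; lra |].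
    rewrite Rmult_assoc, Rinv_r by lra. unfold Rdiv in *; lra. }
  specialize (H e (conj he (Rmin_l _ _))).
  replace (sqdist xs (lincomb 1 e w d)) with (sqdist xs w - 2 * e * hh + e ^ 2 * DD) in H
    by (unfold hh, DD, sqdist, dot, vsub, lincomb; simpl; ring).
  nra.
Qed.

Definition seg_min (xs A B : R * R) (s : R) : Prop :=
  forall s', 0 <= s' <= 1 -> sqdist xs (lincomb (1 - s) s A B) <= sqdist xs (lincomb (1 - s') s' A B).

Lemma seg_min_obtuse_r xs A B s : 0 <= s < 1 -> seg_min xs A B s ->
  dot (vsub B (lincomb (1 - s) s A B)) (vsub xs (lincomb (1 - s) s A B)) <= 0.
Proof.
  intros hs H. apply first_order_dir with (e0 := 1); [lra |].
  intros e he.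
  replace (lincomb 1 e (lincomb (1 - s) s A B) (vsub B (lincomb (1 - s) s A B)))
    with (lincomb (1 - (s + e * (1 - s))) (s + e * (1 - s)) A B)
    by (unfold lincomb, vsub; simpl; f_equal; ring).
  apply H. nra.
Qed.

Lemma seg_min_obtuse_l xs A B s : 0 < s <= 1 -> seg_min xs A B s ->
  dot (vsub A (lincomb (1 - s) s A B)) (vsub xs (lincomb (1 - s) s A B)) <= 0.
Proof.
  intros hs H. apply first_order_dir with (e0 := 1); [lra |].
  intros e he.
  replace (lincomb 1 e (lincomb (1 - s) s A B) (vsub A (lincomb (1 - s) s A B)))
    with (lincomb (1 - (s - e * s)) (s - e * s) A B)
    by (unfold lincomb, vsub; simpl; f_equal; ring).
  apply H. nra.
Qed.

Lemma basis_decomp e d v : cross e d <> 0 ->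
  v = lincomb (cross v d / cross e d) (cross e v / cross e d) e d.
Proof.
  intro hD. destruct e as [e1 e2], d as [d1 d2], v as [v1 v2].
  unfold cross, lincomb in *; simpl in *. f_equal; field; exact hD.
Qed.

(* In the affine frame [W0; W1 - W0, M - W0] the triangle is the standard simplex, and the
   ray leaves it through the side [M, W1] or [W0, M] according to the sign of [alpha + s beta]. *)
Lemma ray_exits_triangle W0 W1 M s v :
  0 < s < 1 -> cross (vsub W1 W0) (vsub M W0) < 0 -> cross (vsub W1 W0) v < 0 ->
  exists tau r, 0 < tau /\ (seg W0 M r \/ seg M W1 r) /\
    r = lincomb 1 tau (lincomb (1 - s) s W0 W1) v.
Proof.
  intros hs hM hv.
  set (D := cross (vsub W1 W0) (vsub M W0)) in *.
  assert (Hv := basis_decomp (vsub W1 W0) (vsub M W0) v (Rlt_not_eq _ _ hM)). fold D in Hv.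
  set (alpha := cross v (vsub M W0) / D) in *.
  set (beta := cross (vsub W1 W0) v / D) in *.
  assert (hbeta : 0 < beta).
  { unfold beta. replace (cross (vsub W1 W0) v / D) with ((- cross (vsub W1 W0) v) / (- D)) by (field; lra).
    apply Rdiv_lt_0_compat; lra. }
  clearbody alpha beta.
  destruct W0 as [p1 p2], W1 as [q1 q2], M as [m1 m2], v as [v1 v2].
  unfold lincomb, vsub in Hv; simpl in Hv. injection Hv as Hv1 Hv2.
  destruct (Rle_lt_dec 0 (alpha + s * beta)) as [hK|hK].
  - set (sg := (alpha + s * beta) / (alpha + beta)).
    exists ((1 - s) / (alpha + beta)), (lincomb (1 - sg) sg (m1, m2) (q1, q2)).
    assert (0 < alpha + beta) by nra.
    split; [apply Rdiv_lt_0_compat; lra |]. split.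
    + right. exists sg. split; [| reflexivity].
      split; [apply Rdiv_ge0 | apply Rdiv_le_1]; nra.
    + unfold sg, lincomb; simpl. rewrite Hv1, Hv2. f_equal; field; lra.
  - set (sg := - (s * beta) / alpha).
    exists (- s / alpha), (lincomb (1 - sg) sg (p1, p2) (m1, m2)).
    assert (alpha < 0) by nra.
    split; [replace (- s / alpha) with (s / - alpha) by (field; lra); apply Rdiv_lt_0_compat; lra |]. split.
    + left. exists sg. split; [| reflexivity].
      unfold sg. replace (- (s * beta) / alpha) with ((s * beta) / - alpha) by (field; lra).
      split; [apply Rdiv_ge0 | apply Rdiv_le_1]; nra.
    + unfold sg, lincomb; simpl. rewrite Hv1, Hv2. f_equal; field; lra.
Qed.

Section EdgeProjection.
Variables W0 W1 xs : R * R.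
Variable s : R.
Hypothesis hs : 0 < s < 1.
Let w := lincomb (1 - s) s W0 W1.
Let e := vsub W1 W0.

Lemma seg_min_orthogonal : seg_min xs W0 W1 s -> dot e (vsub xs w) = 0.
Proof.
  intro H.
  assert (HB := seg_min_obtuse_r xs W0 W1 s ltac:(lra) H).
  assert (HA := seg_min_obtuse_l xs W0 W1 s ltac:(lra) H).
  fold w in HA, HB.
  replace (vsub W1 w) with (lincomb (1 - s) 0 e e) in HB by (unfold w, e, vsub, lincomb; simpl; f_equal; ring).
  replace (vsub W0 w) with (lincomb (- s) 0 e e) in HA by (unfold w, e, vsub, lincomb; simpl; f_equal; ring).
  unfold dot, lincomb in *; simpl in *. nra.
Qed.

Lemma cross_edge_lincomb z : cross e (vsub z w) = cross e (vsub z W0).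
Proof. unfold e, w, cross, vsub, lincomb; simpl; ring. Qed.

(* Lagrange's identity turns the orthogonality of [xs - w] to the edge into
   [dot (z - w) (xs - w) * |e|^2 = cross e (z - W0) * cross e (xs - w)]. *)
Lemma dot_normal z : dot e (vsub xs w) = 0 ->
  dot (vsub z w) (vsub xs w) * dot e e = cross e (vsub z W0) * cross e (vsub xs w).
Proof.
  intro H0. rewrite dot_cross_lagrange, <- cross_edge_lincomb.
  replace (dot (vsub xs w) e) with (dot e (vsub xs w)) by (unfold dot; ring).
  rewrite H0. ring.
Qed.

Lemma outer_normal O : W0 <> W1 -> seg_min xs W0 W1 s -> xs <> w ->
  0 < cross e (vsub O W0) -> dot (vsub O w) (vsub xs w) <= 0 ->
  dot e (vsub xs w) = 0 /\ cross e (vsub xs w) < 0.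
Proof.
  intros hW Hmin hxw hO hOd.
  assert (Hdot := seg_min_orthogonal Hmin).
  assert (hE := dot_self_pos W0 W1 hW). fold e in hE.
  split; auto.
  assert (HO := dot_normal O Hdot).
  destruct (Rtotal_order (cross e (vsub xs w)) 0) as [h|[h|h]]; [exact h | exfalso ..].
  - apply hxw. apply sqdist_eq0.
    assert (L := dot_cross_lagrange e (vsub xs w) (vsub xs w)).
    replace (dot (vsub xs w) e) with (dot e (vsub xs w)) in L by (unfold dot; ring).
    rewrite Hdot, h in L.
    assert (dot (vsub xs w) (vsub xs w) = 0) by (apply Rmult_eq_reg_r with (dot e e); lra).
    unfold sqdist, dot, vsub in *; simpl in *. lra.
  - nra.
Qed.

Lemma halfplane_min z : W0 <> W1 ->
  dot e (vsub xs w) = 0 -> cross e (vsub xs w) < 0 -> 0 <= cross e (vsub z W0) ->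
  sqdist xs w <= sqdist xs z.
Proof.
  intros hW Hdot hc hz. apply sqdist_le_of_obtuse.
  assert (hE := dot_self_pos W0 W1 hW). fold e in hE.
  assert (H := dot_normal z Hdot). nra.
Qed.

Lemma ray_closer M : cross e (vsub M W0) < 0 -> cross e (vsub xs w) < 0 ->
  (forall r l, seg W0 M r \/ seg M W1 r -> 0 <= l <= 1 -> xs <> lincomb (1 - l) l w r) ->
  exists r, (seg W0 M r \/ seg M W1 r) /\ sqdist xs r <= sqdist xs w.
Proof.
  intros hM hc Hout.
  destruct (ray_exits_triangle W0 W1 M s (vsub xs w) hs hM hc) as [tau [r [htau [Hr Er]]]].
  fold w in Er. exists r. split; auto.
  assert (htau1 : tau <= 1).
  { destruct (Rle_lt_dec tau 1) as [h|h]; auto. exfalso.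
    apply (Hout r (/ tau) Hr).
    - split; [left; apply Rinv_0_lt_compat; lra |].
      rewrite <- Rinv_1. left; apply Rinv_lt_contravar; lra.
    - rewrite Er. destruct xs, w. unfold lincomb, vsub; simpl. f_equal; field; lra. }
  replace (sqdist xs r) with ((1 - tau) ^ 2 * sqdist xs w)
    by (rewrite Er; destruct xs, w; unfold sqdist, lincomb, vsub; simpl; ring).
  assert (0 <= sqdist xs w) by apply sqdist_ge0.
  assert ((1 - tau) ^ 2 <= 1) by nra. nra.
Qed.

End EdgeProjection.

(** * Angles *)

Lemma INR_ge_3 (m : nat) : (3 <= m)%nat -> 3 <= INR m.
Proof. intro. replace 3 with (INR 3) by (simpl; ring). apply le_INR; auto. Qed.

Lemma nat_floor (N : nat) (x : R) : 0 <= x < INR N ->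
  exists n, (n < N)%nat /\ INR n <= x < INR n + 1.
Proof.
  induction N as [|N IH]; intros [h1 h2]; [simpl in h2; lra |].
  rewrite S_INR in h2. destruct (Rlt_le_dec x (INR N)).
  - destruct (IH (conj h1 r)) as [n [hn hx]]. exists n; split; [lia | auto].
  - exists N; split; [lia | lra].
Qed.

Lemma finite_argmax (f : nat -> R) (m : nat) : (1 <= m)%nat ->
  exists s0, (s0 < m)%nat /\ forall s, (s < m)%nat -> f s <= f s0.
Proof.
  induction m as [|m IH]; intro hm; [lia |].
  destruct (Nat.eq_dec m 0) as [->|hm0].
  - exists 0%nat. split; [lia |]. intros s hs. replace s with 0%nat by lia. lra.
  - destruct (IH ltac:(lia)) as [s0 [hs0 H]].
    destruct (Rle_lt_dec (f m) (f s0)).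
    + exists s0. split; [lia |]. intros s hs. destruct (Nat.eq_dec s m); [subst; auto | apply H; lia].
    + exists m. split; [lia |]. intros s hs. destruct (Nat.eq_dec s m); [subst; lra |].
      specialize (H s ltac:(lia)). lra.
Qed.

Lemma polar (x y : R) : (x, y) <> (0, 0) ->
  exists th r, 0 <= th < 2 * PI /\ 0 < r /\ x = r * cos th /\ y = r * sin th.
Proof.
  intro H.
  assert (hr2 : 0 < x ^ 2 + y ^ 2).
  { destruct (Req_dec x 0); destruct (Req_dec y 0); subst; try congruence; nra. }
  set (r := sqrt (x ^ 2 + y ^ 2)).
  assert (hr : 0 < r) by (apply sqrt_lt_R0; auto).
  assert (hrr : r * r = x ^ 2 + y ^ 2) by (apply sqrt_sqrt; lra).
  set (c := x / r).
  assert (hc : -1 <= c <= 1).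
  { assert ((x / r) ^ 2 <= 1).
    { replace ((x / r) ^ 2) with (x ^ 2 / (r * r)) by (field; lra). apply Rdiv_le_1; nra. }
    unfold c. nra. }
  assert (Hs : sqrt (1 - c²) = Rabs y / r).
  { unfold c. replace (1 - (x / r)²) with ((Rabs y / r) ^ 2).
    - rewrite <- Rsqr_pow2, sqrt_Rsqr; auto. apply Rdiv_ge0; auto. apply Rabs_pos.
    - replace ((Rabs y / r) ^ 2) with (Rabs y ^ 2 / (r * r)) by (field; lra).
      rewrite pow2_abs. unfold Rsqr. field_simplify_eq; [nra | lra]. }
  assert (hb := acos_bound c). assert (PI_pos := PI_RGT_0).
  destruct (Rle_lt_dec 0 y) as [hy|hy].
  - exists (acos c), r. split; [lra |]. split; auto.
    rewrite cos_acos, sin_acos, Hs, Rabs_pos_eq by auto.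
    unfold c; split; field; lra.
  - assert (Hsy : sin (acos c) = - y / r) by (rewrite sin_acos, Hs, Rabs_left by auto; auto).
    assert (0 < acos c).
    { destruct (Req_dec (acos c) 0) as [E|E]; [| lra]. rewrite E, sin_0 in Hsy.
      assert (y = 0); [| lra].
      apply Rmult_eq_reg_r with (/ r); [unfold Rdiv in Hsy; lra | apply Rinv_neq_0_compat; lra]. }
    exists (2 * PI - acos c), r. split; [lra |]. split; auto.
    rewrite cos_minus, sin_minus, cos_2PI, sin_2PI, cos_acos, Hsy by auto.
    unfold c; split; field; lra.
Qed.

Lemma sector_decomp al be th : 0 < be - al < PI -> al <= th <= be ->
  cos th = (sin (be - th) * cos al + sin (th - al) * cos be) / sin (be - al) /\
  sin th = (sin (be - th) * sin al + sin (th - al) * sin be) / sin (be - al).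
Proof.
  intros h1 h2.
  assert (0 < sin (be - al)) by (apply sin_gt_0; lra).
  rewrite !sin_minus.
  assert (E : sin (be - al) = sin be * cos al - cos be * sin al) by apply sin_minus.
  rewrite <- E.
  split; apply Rmult_eq_reg_r with (sin (be - al)); try lra; unfold Rdiv;
    rewrite Rmult_assoc, Rinv_l, Rmult_1_r, E by lra;
    generalize (sin2_cos2 th) (sin2_cos2 al) (sin2_cos2 be); unfold Rsqr; intros; nra.
Qed.

Lemma sin_frac_neg (q m : R) : 0 < m -> (- m < q < 0 \/ m < q < 2 * m) ->
  sin (PI * q / m) < 0.
Proof.
  intros hm hq. assert (PI_pos := PI_RGT_0).
  set (u := PI * q / m). assert (Hu : u * m = PI * q) by (unfold u; field; lra).
  destruct hq as [hq|hq]; [apply sin_lt_0_var | apply sin_lt_0]; nra.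
Qed.

Ltac nat_le_to_R H :=
  apply le_INR in H; rewrite ?S_INR, ?plus_INR, ?mult_INR in H; simpl INR in H.

(* The hypotheses say that vertex [j] of [P_{p,2m}] lies in the closed angular sector
   of edge [s] of [P_{p,m}]; the only such vertices are the two endpoints of the edge
   and the new vertex [2s+1] (indices mod [2m]). *)
Lemma sector_index (m j s : nat) : (3 <= m)%nat -> (j < 2 * m)%nat -> (s < m)%nat ->
  0 <= sin (PI * (INR j - 2 * INR s) / INR m) ->
  0 <= sin (PI * (2 * INR s + 2 - INR j) / INR m) ->
  j = (2 * s)%nat \/ j = (2 * s + 1)%nat \/ j = (2 * s + 2)%nat \/ (j = 0%nat /\ s = (m - 1)%nat).
Proof.
  intros hm hj hs H1 H2.
  assert (HM : 0 < INR m) by (apply lt_0_INR; lia).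
  assert (C : j = (2 * s)%nat \/ j = (2 * s + 1)%nat \/ j = (2 * s + 2)%nat \/ (j = 0%nat /\ s = (m - 1)%nat)
    \/ (2 * s + 3 <= j /\ j <= 2 * s + m)%nat \/ (2 * s + m + 1 <= j)%nat
    \/ (j + 1 <= 2 * s /\ 2 * s + 1 <= j + m)%nat \/ (j + m <= 2 * s /\ 2 * s + 3 <= j + 2 * m)%nat)
    by lia.
  destruct C as [C|[C|[C|[C|[[c1 c2]|[c|[[c1 c2]|[c1 c2]]]]]]]]; auto; exfalso;
    nat_le_to_R hj; nat_le_to_R hs; assert (Hs0 := pos_INR s); assert (Hj0 := pos_INR j).
  - nat_le_to_R c1. nat_le_to_R c2.
    assert (sin (PI * (2 * INR s + 2 - INR j) / INR m) < 0) by (apply sin_frac_neg; lra). lra.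
  - nat_le_to_R c.
    assert (sin (PI * (INR j - 2 * INR s) / INR m) < 0) by (apply sin_frac_neg; lra). lra.
  - nat_le_to_R c1. nat_le_to_R c2.
    assert (sin (PI * (INR j - 2 * INR s) / INR m) < 0) by (apply sin_frac_neg; lra). lra.
  - nat_le_to_R c1. nat_le_to_R c2.
    assert (sin (PI * (2 * INR s + 2 - INR j) / INR m) < 0) by (apply sin_frac_neg; lra). lra.
Qed.

Lemma pow2_mul_ge3 (k n : nat) : (3 <= k)%nat -> (3 <= 2 ^ n * k)%nat.
Proof. intro. assert (2 ^ n <> 0)%nat by (apply Nat.pow_nonzero; lia). nia. Qed.

Lemma pow2_ge_S (N : nat) : (S N <= 2 ^ N)%nat.
Proof. induction N; [simpl; lia | rewrite Nat.pow_succ_r'; lia]. Qed.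

(** * The superellipse *)

Definition level (a b p : R) (z : R * R) : R := abspow (fst z / a) p + abspow (snd z / b) p.
Definition curve (a b p th : R) : R * R := phi a b p (cos th, sin th).
Definition curve_norm (a b p th : R) : R := pnorm a b p (cos th, sin th).
Definition angle (m t : nat) : R := 2 * INR t * PI / INR m.

Lemma curve_eq a b p th :
  curve a b p th = (cos th / curve_norm a b p th, sin th / curve_norm a b p th).
Proof. reflexivity. Qed.

Lemma vertex_curve a b p m t : vertex a b p m t = curve a b p (angle m t).
Proof. reflexivity. Qed.

Lemma curve_shift a b p th (k : nat) : curve a b p (th + 2 * INR k * PI) = curve a b p th.
Proof. unfold curve. rewrite sin_period, cos_period. reflexivity. Qed.

Lemma vertex_period a b p m t : (0 < m)%nat -> vertex a b p m (t + m) = vertex a b p m t.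
Proof.
  intro hm. rewrite !vertex_curve, <- (curve_shift a b p (angle m t) 1).
  f_equal. unfold angle. rewrite plus_INR. simpl INR. field. apply not_0_INR. lia.
Qed.

Lemma vertex_mm a b p m : (0 < m)%nat -> vertex a b p m m = vertex a b p m 0.
Proof. intro. rewrite <- (vertex_period a b p m 0) by auto. reflexivity. Qed.

Lemma vertex_double a b p m t : (0 < m)%nat -> vertex a b p (2 * m) (2 * t) = vertex a b p m t.
Proof.
  intro hm. rewrite !vertex_curve. f_equal. unfold angle. rewrite !mult_INR. simpl INR.
  field. apply not_0_INR. lia.
Qed.

Lemma pnorm_swap a b p x y : pnorm a b p (- y, x) = pnorm b a p (x, y).
Proof.
  unfold pnorm; simpl. replace (- y / a) with (- (y / a)) by (unfold Rdiv; ring).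
  rewrite abspow_opp, (Rplus_comm (abspow (y / a) p)). reflexivity.
Qed.

Lemma pnorm_opp_r a b p x y : pnorm a b p (x, - y) = pnorm a b p (x, y).
Proof.
  unfold pnorm; simpl. replace (- y / b) with (- (y / b)) by (unfold Rdiv; ring).
  rewrite abspow_opp. reflexivity.
Qed.

Lemma pnorm_opp_l a b p x y : pnorm a b p (- x, y) = pnorm a b p (x, y).
Proof.
  unfold pnorm; simpl. replace (- x / a) with (- (x / a)) by (unfold Rdiv; ring).
  rewrite abspow_opp. reflexivity.
Qed.

Lemma curve_rot a b p th :
  curve a b p (th + PI / 2) = (- snd (curve b a p th), fst (curve b a p th)).
Proof.
  unfold curve, phi; simpl.
  replace (cos (th + PI / 2)) with (- sin th) by (rewrite cos_plus, cos_PI2, sin_PI2; ring).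
  replace (sin (th + PI / 2)) with (cos th) by (rewrite sin_plus, cos_PI2, sin_PI2; ring).
  rewrite pnorm_swap. f_equal. unfold Rdiv; ring.
Qed.

Lemma curve_opp a b p th : curve a b p (- th) = (fst (curve a b p th), - snd (curve a b p th)).
Proof.
  unfold curve, phi; simpl. rewrite cos_neg, sin_neg, pnorm_opp_r. f_equal. unfold Rdiv; ring.
Qed.

Lemma curve_PI_minus a b p th :
  curve a b p (PI - th) = (- fst (curve a b p th), snd (curve a b p th)).
Proof.
  unfold curve, phi; simpl. rewrite sin_PI_x.
  replace (cos (PI - th)) with (- cos th) by (rewrite cos_minus, cos_PI, sin_PI; ring).
  rewrite pnorm_opp_l. f_equal. unfold Rdiv; ring.
Qed.

Lemma cos_sin_neq0 th : (cos th, sin th) <> (0, 0).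
Proof. intro H. injection H as Hc Hs. apply (cos_sin_0 th). auto. Qed.

Section Level.
Variables a b p : R.
Hypothesis ha : 0 < a.
Hypothesis hb : 0 < b.
Hypothesis hp : 1 < p.

Notation F := (level a b p).

Lemma level_ge0 z : 0 <= F z.
Proof. unfold level. generalize (abspow_ge0 p (fst z / a)) (abspow_ge0 p (snd z / b)). lra. Qed.

Lemma level_origin : F (0, 0) = 0.
Proof. unfold level; simpl. unfold Rdiv. rewrite !Rmult_0_l, abspow_0. ring. Qed.

Lemma level_pos z : z <> (0, 0) -> 0 < F z.
Proof.
  intro H. destruct z as [x y]. unfold level; simpl.
  assert (Hx := abspow_ge0 p (x / a)). assert (Hy := abspow_ge0 p (y / b)).
  destruct (Req_dec x 0) as [->|hx].
  - assert (hy : y / b <> 0).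
    { intro E. apply H. f_equal. apply Rmult_eq_reg_r with (/ b); [| apply Rinv_neq_0_compat; lra].
      unfold Rdiv in E. lra. }
    generalize (abspow_pos p (y / b) hy). lra.
  - assert (hx' : x / a <> 0).
    { intro E. apply hx. apply Rmult_eq_reg_r with (/ a); [| apply Rinv_neq_0_compat; lra].
      unfold Rdiv in E. lra. }
    generalize (abspow_pos p (x / a) hx'). lra.
Qed.

Lemma level_scale c x y : 0 < c -> F (c * x, c * y) = Rpower c p * F (x, y).
Proof.
  intro hc. unfold level; simpl.
  replace (c * x / a) with (c * (x / a)) by (field; lra).
  replace (c * y / b) with (c * (y / b)) by (field; lra).
  rewrite !abspow_scale by lra. ring.
Qed.

Lemma pnorm_level z : z <> (0, 0) -> pnorm a b p z = Rpower (F z) (1 / p).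
Proof.
  intro H. unfold pnorm. fold (F z).
  destruct (Req_EM_T (F z) 0); [generalize (level_pos z H); lra | reflexivity].
Qed.

Lemma pnorm_pos z : z <> (0, 0) -> 0 < pnorm a b p z.
Proof. intro. rewrite pnorm_level by auto. apply exp_pos. Qed.

Lemma level_phi z : z <> (0, 0) -> F (phi a b p z) = 1.
Proof.
  intro H. destruct z as [x y]. unfold phi; simpl.
  assert (hN := pnorm_pos (x, y) H). assert (hF := level_pos (x, y) H).
  replace (x / pnorm a b p (x, y)) with (/ pnorm a b p (x, y) * x) by (field; lra).
  replace (y / pnorm a b p (x, y)) with (/ pnorm a b p (x, y) * y) by (field; lra).
  rewrite level_scale by (apply Rinv_0_lt_compat; auto).
  rewrite pnorm_level, <- Rpower_Ropp, Rpower_mult by auto.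
  replace (- (1 / p) * p) with (- (1)) by (field; lra).
  rewrite Rpower_Ropp, Rpower_1 by auto. field. lra.
Qed.

Lemma level_convex z z' t : 0 <= t <= 1 ->
  F (lincomb (1 - t) t z z') <= (1 - t) * F z + t * F z'.
Proof.
  intro ht. unfold level, lincomb; simpl.
  replace (((1 - t) * fst z + t * fst z') / a) with ((1 - t) * (fst z / a) + t * (fst z' / a)) by (field; lra).
  replace (((1 - t) * snd z + t * snd z') / b) with ((1 - t) * (snd z / b) + t * (snd z' / b)) by (field; lra).
  generalize (abspow_convex p hp (fst z / a) (fst z' / a) t ht)
             (abspow_convex p hp (snd z / b) (snd z' / b) t ht). lra.
Qed.

Lemma level_strict_convex z z' t : 0 < t < 1 -> z <> z' ->
  F (lincomb (1 - t) t z z') < (1 - t) * F z + t * F z'.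
Proof.
  intros ht hz. unfold level, lincomb; simpl.
  replace (((1 - t) * fst z + t * fst z') / a) with ((1 - t) * (fst z / a) + t * (fst z' / a)) by (field; lra).
  replace (((1 - t) * snd z + t * snd z') / b) with ((1 - t) * (snd z / b) + t * (snd z' / b)) by (field; lra).
  assert (ht' : 0 <= t <= 1) by lra.
  generalize (abspow_convex p hp (fst z / a) (fst z' / a) t ht')
             (abspow_convex p hp (snd z / b) (snd z' / b) t ht').
  destruct z as [x y], z' as [x' y']; simpl.
  destruct (Req_dec x x') as [<-|hx].
  - assert (hy : y / b <> y' / b) by (intro E; apply hz; f_equal; field_simplify_eq in E; lra).
    generalize (abspow_strict_convex p hp (y / b) (y' / b) t ht hy). lra.
  - assert (hx' : x / a <> x' / a) by (intro E; apply hx; field_simplify_eq in E; lra).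
    generalize (abspow_strict_convex p hp (x / a) (x' / a) t ht hx'). lra.
Qed.

(* A combination with [l + m <= 1] is a convex combination scaled by [l + m], and
   [F (c z) = c^p F z <= c F z] for [0 < c <= 1]. *)
Lemma level_lincomb l m A B : 0 <= l -> 0 <= m -> l + m <= 1 ->
  F (lincomb l m A B) <= l * F A + m * F B.
Proof.
  intros hl hm hlm.
  destruct (Req_dec (l + m) 0).
  - replace l with 0 by lra. replace m with 0 by lra.
    replace (lincomb 0 0 A B) with (0, 0) by (unfold lincomb; f_equal; ring).
    rewrite level_origin. lra.
  - set (c := l + m). assert (hc : 0 < c) by (unfold c; lra).
    set (t := m / c).
    assert (ht : 0 <= t <= 1) by (split; [apply Rdiv_ge0 | apply Rdiv_le_1]; unfold c; lra).
    replace (lincomb l m A B) with (c * fst (lincomb (1 - t) t A B), c * snd (lincomb (1 - t) t A B))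
      by (unfold lincomb, t, c in *; simpl; f_equal; field; lra).
    rewrite level_scale by auto. destruct (lincomb (1 - t) t A B) as [u v] eqn:E. cbn [fst snd]. cbn [fst snd].
    assert (C := level_convex A B t ht). rewrite E in C.
    assert (Rpower c p <= c) by (apply Rpower_le_self; auto; unfold c; lra).
    assert (0 <= F (u, v)) by apply level_ge0.
    assert (Hle : Rpower c p * F (u, v) <= c * ((1 - t) * F A + t * F B)).
    { apply Rle_trans with (c * F (u, v)); [apply Rmult_le_compat_r | apply Rmult_le_compat_l]; lra. }
    replace (c * ((1 - t) * F A + t * F B)) with (l * F A + m * F B) in Hle by (unfold t, c in *; field; lra).
    exact Hle.
Qed.

Lemma level_lincomb_lt1 l m A B : 0 < l -> 0 < m -> l + m <= 1 -> A <> B ->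
  F A = 1 -> F B = 1 -> F (lincomb l m A B) < 1.
Proof.
  intros hl hm hlm hAB hA hB.
  set (c := l + m). assert (hc : 0 < c) by (unfold c; lra).
  set (t := m / c).
  assert (ht : 0 < t < 1) by (split; [apply Rdiv_lt_0_compat | apply Rdiv_lt_1]; unfold c; lra).
  replace (lincomb l m A B) with (c * fst (lincomb (1 - t) t A B), c * snd (lincomb (1 - t) t A B))
    by (unfold lincomb, t, c in *; simpl; f_equal; field; lra).
  rewrite level_scale by auto. destruct (lincomb (1 - t) t A B) as [u v] eqn:E. cbn [fst snd].
  assert (C := level_strict_convex A B t ht hAB). rewrite E, hA, hB in C.
  assert (Rpower c p <= c) by (apply Rpower_le_self; auto; unfold c; lra).
  assert (0 <= F (u, v)) by apply level_ge0.
  assert (Rpower c p * F (u, v) <= 1 * F (u, v)) by (apply Rmult_le_compat_r; unfold c in *; lra).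
  lra.
Qed.

Lemma level_continuous x0 y0 eps : 0 < eps -> exists del, 0 < del /\
  forall x y, Rabs (x - x0) < del -> Rabs (y - y0) < del -> Rabs (F (x, y) - F (x0, y0)) < eps.
Proof.
  intro he.
  destruct (continuity_abspow p hp (x0 / a) (eps / 2) ltac:(lra)) as [d1 [hd1 H1]].
  destruct (continuity_abspow p hp (y0 / b) (eps / 2) ltac:(lra)) as [d2 [hd2 H2]].
  exists (Rmin (d1 * a) (d2 * b)). split; [apply Rmin_pos; nra |].
  intros x y hx hy. unfold level; simpl.
  assert (hx' : Rabs (x / a - x0 / a) < d1).
  { replace (x / a - x0 / a) with ((x - x0) / a) by (field; lra).
    unfold Rdiv. rewrite Rabs_mult, Rabs_inv, (Rabs_pos_eq a) by lra.
    assert (Rabs (x - x0) < d1 * a) by (eapply Rlt_le_trans; [exact hx | apply Rmin_l]).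
    apply Rmult_lt_reg_r with a; auto. field_simplify; lra. }
  assert (hy' : Rabs (y / b - y0 / b) < d2).
  { replace (y / b - y0 / b) with ((y - y0) / b) by (field; lra).
    unfold Rdiv. rewrite Rabs_mult, Rabs_inv, (Rabs_pos_eq b) by lra.
    assert (Rabs (y - y0) < d2 * b) by (eapply Rlt_le_trans; [exact hy | apply Rmin_r]).
    apply Rmult_lt_reg_r with b; auto. field_simplify; lra. }
  assert (E1 : Rabs (abspow (x / a) p - abspow (x0 / a) p) < eps / 2).
  { destruct (Req_dec (x / a) (x0 / a)) as [E|E]; [rewrite E, Rminus_diag, Rabs_R0; lra |].
    apply (H1 (x / a)). repeat split; auto. }
  assert (E2 : Rabs (abspow (y / b) p - abspow (y0 / b) p) < eps / 2).
  { destruct (Req_dec (y / b) (y0 / b)) as [E|E]; [rewrite E, Rminus_diag, Rabs_R0; lra |].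
    apply (H2 (y / b)). repeat split; auto. }
  replace (abspow (x / a) p + abspow (y / b) p - (abspow (x0 / a) p + abspow (y0 / b) p))
    with ((abspow (x / a) p - abspow (x0 / a) p) + (abspow (y / b) p - abspow (y0 / b) p)) by ring.
  eapply Rle_lt_trans; [apply Rabs_triang | lra].
Qed.

Lemma level_line_continuous x0 y0 dx dy : continuity (fun l => F (x0 + l * dx, y0 + l * dy)).
Proof.
  intros l eps he.
  destruct (level_continuous (x0 + l * dx) (y0 + l * dy) eps he) as [d [hd H]].
  set (K := Rabs dx + Rabs dy + 1).
  assert (hK : 0 < K) by (unfold K; generalize (Rabs_pos dx) (Rabs_pos dy); lra).
  exists (d / K). split; [apply Rdiv_lt_0_compat; lra |].
  intros l' [_ hl]. simpl in *. unfold R_dist in *.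
  assert (hlK : Rabs (l' - l) * K < d).
  { apply Rmult_lt_reg_r with (/ K); [apply Rinv_0_lt_compat; lra |].
    rewrite Rmult_assoc, Rinv_r by lra. lra. }
  assert (Hl := Rabs_pos (l' - l)). assert (Hx := Rabs_pos dx). assert (Hy := Rabs_pos dy).
  apply H.
  - replace (x0 + l' * dx - (x0 + l * dx)) with ((l' - l) * dx) by ring.
    rewrite Rabs_mult. unfold K in hlK. nra.
  - replace (y0 + l' * dy - (y0 + l * dy)) with ((l' - l) * dy) by ring.
    rewrite Rabs_mult. unfold K in hlK. nra.
Qed.

Lemma curve_norm_pos th : 0 < curve_norm a b p th.
Proof. apply pnorm_pos, cos_sin_neq0. Qed.

Lemma level_curve th : F (curve a b p th) = 1.
Proof. apply level_phi, cos_sin_neq0. Qed.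

Lemma level_vertex m t : F (vertex a b p m t) = 1.
Proof. apply level_curve. Qed.

Lemma cross_curve al be :
  cross (curve a b p al) (curve a b p be) = sin (be - al) / (curve_norm a b p al * curve_norm a b p be).
Proof.
  rewrite !curve_eq. unfold cross; simpl. rewrite sin_minus.
  generalize (curve_norm_pos al) (curve_norm_pos be); intros. field. lra.
Qed.

Lemma sin_nonneg_of_cross al th :
  0 <= cross (curve a b p al) (curve a b p th) -> 0 <= sin (th - al).
Proof.
  rewrite cross_curve. intro H.
  assert (Hal := curve_norm_pos al). assert (Hth := curve_norm_pos th).
  assert (0 < curve_norm a b p al * curve_norm a b p th) by (apply Rmult_lt_0_compat; auto).
  replace (sin (th - al))
    with (sin (th - al) / (curve_norm a b p al * curve_norm a b p th) * (curve_norm a b p al * curve_norm a b p th))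
    by (field; lra).
  nra.
Qed.

Lemma curve_decomp al be th : 0 < be - al < PI -> al <= th <= be ->
  curve a b p th = lincomb (sin (be - th) * curve_norm a b p al / (sin (be - al) * curve_norm a b p th))
                          (sin (th - al) * curve_norm a b p be / (sin (be - al) * curve_norm a b p th))
                          (curve a b p al) (curve a b p be).
Proof.
  intros h1 h2.
  destruct (sector_decomp al be th h1 h2) as [Ec Es].
  assert (0 < sin (be - al)) by (apply sin_gt_0; lra).
  generalize (curve_norm_pos al) (curve_norm_pos be) (curve_norm_pos th); intros.
  rewrite !curve_eq. unfold lincomb; simpl. rewrite Ec, Es at 1. f_equal; field; lra.
Qed.

Lemma level_cos_sin_continuous th : continuity_pt (fun t => F (cos t, sin t)) th.
Proof.
  unfold level; simpl. apply continuity_pt_plus.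
  - apply continuity_pt_comp with (f1 := fun t => cos t / a) (f2 := fun u => abspow u p).
    + unfold Rdiv. apply continuity_pt_mult; [apply continuity_cos | apply continuity_pt_const; intros u v; auto].
    + apply continuity_abspow; auto.
  - apply continuity_pt_comp with (f1 := fun t => sin t / b) (f2 := fun u => abspow u p).
    + unfold Rdiv. apply continuity_pt_mult; [apply continuity_sin | apply continuity_pt_const; intros u v; auto].
    + apply continuity_abspow; auto.
Qed.

Lemma curve_norm_continuous th : continuity_pt (curve_norm a b p) th.
Proof.
  apply continuity_pt_locally_ext with (f := fun t => exp (1 / p * ln (F (cos t, sin t)))) (a := 1); [lra | |].
  - intros y _. unfold curve_norm. rewrite pnorm_level by apply cos_sin_neq0. reflexivity.
  - apply continuity_pt_comp with (f1 := fun t => 1 / p * ln (F (cos t, sin t))) (f2 := exp).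
    + apply continuity_pt_scal, continuity_pt_comp with (f1 := fun t => F (cos t, sin t)) (f2 := ln).
      * apply level_cos_sin_continuous.
      * apply derivable_continuous_pt. exists (/ F (cos th, sin th)).
        apply derivable_pt_lim_ln, level_pos, cos_sin_neq0.
    + apply derivable_continuous_pt, derivable_pt_exp.
Qed.

Lemma curve_continuous th eps : 0 < eps -> exists del, 0 < del /\ forall th', Rabs (th' - th) < del ->
  Rabs (fst (curve a b p th') - fst (curve a b p th)) < eps /\
  Rabs (snd (curve a b p th') - snd (curve a b p th)) < eps.
Proof.
  intro he. assert (hN := curve_norm_pos th).
  assert (C1 : continuity_pt (fun t => cos t / curve_norm a b p t) th)
    by (apply continuity_pt_div; [apply continuity_cos | apply curve_norm_continuous | lra]).
  assert (C2 : continuity_pt (fun t => sin t / curve_norm a b p t) th)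
    by (apply continuity_pt_div; [apply continuity_sin | apply curve_norm_continuous | lra]).
  destruct (continuity_pt_eps _ _ C1 eps he) as [d1 [hd1 H1]].
  destruct (continuity_pt_eps _ _ C2 eps he) as [d2 [hd2 H2]].
  exists (Rmin d1 d2). split; [apply Rmin_pos; auto |].
  intros th' h. rewrite !curve_eq. simpl. split.
  - apply H1. eapply Rlt_le_trans; [exact h | apply Rmin_l].
  - apply H2. eapply Rlt_le_trans; [exact h | apply Rmin_r].
Qed.

Lemma level1_curve z : F z = 1 -> exists th, 0 <= th < 2 * PI /\ z = curve a b p th.
Proof.
  intro H. destruct z as [x y].
  assert (hz : (x, y) <> (0, 0)) by (intro E; injection E as -> ->; rewrite level_origin in H; lra).
  destruct (polar x y hz) as [th [r [hth [hr [hx hy]]]]].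
  exists th. split; auto.
  assert (hrp : 0 < Rpower r p) by apply exp_pos.
  assert (HF : F (cos th, sin th) = Rpower r (- p)).
  { rewrite Rpower_Ropp. apply Rmult_eq_reg_l with (Rpower r p); [| lra].
    rewrite Rinv_r, <- level_scale, <- hx, <- hy by lra. exact H. }
  assert (HN : curve_norm a b p th = / r).
  { unfold curve_norm. rewrite pnorm_level, HF, Rpower_mult by apply cos_sin_neq0.
    replace (- p * (1 / p)) with (- (1)) by (field; lra). rewrite Rpower_Ropp, Rpower_1 by auto. reflexivity. }
  rewrite curve_eq, HN, hx, hy. f_equal; field; lra.
Qed.

End Level.

Lemma angle_step m s : (0 < m)%nat -> angle m (S s) - angle m s = 2 * (PI / INR m).
Proof. intro hm. unfold angle. rewrite S_INR. field. apply not_0_INR. lia. Qed.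

Lemma angle_step_bounds m : (3 <= m)%nat -> 0 < PI / INR m < PI / 2.
Proof.
  intro hm. assert (HM := INR_ge_3 m hm). assert (PI_pos := PI_RGT_0).
  split; [apply Rdiv_lt_0_compat; lra |].
  apply Rmult_lt_reg_r with (INR m); [lra |]. unfold Rdiv. rewrite Rmult_assoc, Rinv_l by lra. nra.
Qed.

Lemma angle_bracket (m : nat) th : (1 <= m)%nat -> 0 <= th < 2 * PI ->
  exists s, (s < m)%nat /\ angle m s <= th < angle m (S s).
Proof.
  intros hm hth. assert (HM : 0 < INR m) by (apply lt_0_INR; lia). assert (PI_pos := PI_RGT_0).
  destruct (nat_floor m (th * INR m / (2 * PI))) as [s [hs [h1 h2]]].
  { split; [apply Rdiv_ge0; [apply Rmult_le_pos |]; lra |].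
    apply Rmult_lt_reg_r with (2 * PI); [lra |]. field_simplify; [nra | lra]. }
  exists s. split; [exact hs |]. unfold angle. rewrite S_INR.
  replace th with (th * INR m / (2 * PI) * (2 * PI / INR m)) by (field; lra).
  replace (2 * INR s * PI / INR m) with (INR s * (2 * PI / INR m)) by (field; lra).
  replace (2 * (INR s + 1) * PI / INR m) with ((INR s + 1) * (2 * PI / INR m)) by (field; lra).
  assert (0 < 2 * PI / INR m) by (apply Rdiv_lt_0_compat; lra).
  split; [apply Rmult_le_compat_r | apply Rmult_lt_compat_r]; lra.
Qed.

(** * Consecutive chords of the angular grid *)

Definition chord_dot (a b p al de : R) : R :=
  dot (vsub (curve a b p (al + de)) (curve a b p al))
      (vsub (curve a b p (al + 2 * de)) (curve a b p al)).

Lemma chord_dot_rot a b p al de : chord_dot a b p (al + PI / 2) de = chord_dot b a p al de.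
Proof.
  unfold chord_dot.
  replace (al + PI / 2 + de) with ((al + de) + PI / 2) by ring.
  replace (al + PI / 2 + 2 * de) with ((al + 2 * de) + PI / 2) by ring.
  rewrite !curve_rot. unfold dot, vsub; cbn [fst snd]. ring.
Qed.

Section Quadrant.
Variables a b p : R.
Hypothesis ha : 0 < a.
Hypothesis hb : 0 < b.
Hypothesis hp : 1 < p.

Notation F := (level a b p).
Notation curve := (curve a b p).

Lemma level_lt_mono x1 y1 x2 y2 : 0 <= x1 <= x2 -> 0 <= y1 <= y2 -> (x1 < x2 \/ y1 < y2) ->
  F (x1, y1) < F (x2, y2).
Proof.
  intros hx hy hxy. unfold level; simpl.
  assert (Hx : forall u v c, 0 < c -> 0 <= u <= v -> 0 <= u / c <= v / c).
  { intros u v c hc huv. unfold Rdiv. assert (0 < / c) by (apply Rinv_0_lt_compat; auto). nra. }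
  assert (Hlt : forall u v c, 0 < c -> 0 <= u -> u < v -> u / c < v / c).
  { intros u v c hc hu huv. unfold Rdiv. apply Rmult_lt_compat_r; auto. apply Rinv_0_lt_compat; auto. }
  destruct (Hx x1 x2 a ha hx), (Hx y1 y2 b hb hy).
  destruct hxy as [h|h].
  - assert (abspow (x1 / a) p < abspow (x2 / a) p) by (apply abspow_lt; auto; apply Hlt; lra).
    assert (abspow (y1 / b) p <= abspow (y2 / b) p) by (apply abspow_le; auto). lra.
  - assert (abspow (x1 / a) p <= abspow (x2 / a) p) by (apply abspow_le; auto).
    assert (abspow (y1 / b) p < abspow (y2 / b) p) by (apply abspow_lt; auto; apply Hlt; lra). lra.
Qed.

(* On the arc of [C_p] in the closed first quadrant, turning counterclockwise
   decreases [x] and increases [y]. *)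
Lemma unit_level_order x1 y1 x2 y2 : 0 <= x1 -> 0 <= y1 -> 0 <= x2 -> 0 <= y2 ->
  F (x1, y1) = 1 -> F (x2, y2) = 1 -> 0 <= x1 * y2 - y1 * x2 -> x2 <= x1 /\ y1 <= y2.
Proof.
  intros h1 h2 h3 h4 F1 F2 hc. split.
  - destruct (Rle_lt_dec x2 x1) as [h|h]; auto. exfalso.
    destruct (Req_dec x1 0) as [->|e].
    + assert (y1 = 0) by nra. subst. rewrite level_origin in F1. lra.
    + assert (y1 <= y2) by (destruct (Rle_lt_dec y1 y2); auto; nra).
      assert (F (x1, y1) < F (x2, y2)) by (apply level_lt_mono; auto; lra). lra.
  - destruct (Rle_lt_dec y1 y2) as [h|h]; auto. exfalso.
    destruct (Req_dec y2 0) as [->|e].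
    + assert (x2 = 0) by nra. subst. rewrite level_origin in F2. lra.
    + assert (x2 <= x1) by (destruct (Rle_lt_dec x2 x1); auto; nra).
      assert (F (x2, y2) < F (x1, y1)) by (apply level_lt_mono; auto; lra). lra.
Qed.

Lemma curve_nonneg th : 0 <= th <= PI / 2 -> 0 <= fst (curve th) /\ 0 <= snd (curve th).
Proof.
  intro h. rewrite curve_eq. simpl. assert (Hn := curve_norm_pos a b p ha hb th).
  split; apply Rdiv_ge0; auto; [apply cos_ge_0 | apply sin_ge_0]; generalize PI_RGT_0; lra.
Qed.

Lemma curve_mono th1 th2 : 0 <= th1 <= th2 -> th2 <= PI / 2 ->
  fst (curve th2) <= fst (curve th1) /\ snd (curve th1) <= snd (curve th2).
Proof.
  intros h1 h2.
  destruct (curve_nonneg th1 ltac:(lra)) as [u1 u2]. destruct (curve_nonneg th2 ltac:(lra)) as [u3 u4].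
  assert (F1 := level_curve a b p ha hb hp th1). assert (F2 := level_curve a b p ha hb hp th2).
  assert (C := cross_curve a b p ha hb th1 th2).
  assert (Hs : 0 <= sin (th2 - th1)) by (apply sin_ge_0; generalize PI_RGT_0; lra).
  assert (Hn := Rmult_lt_0_compat _ _ (curve_norm_pos a b p ha hb th1) (curve_norm_pos a b p ha hb th2)).
  destruct (curve th1) as [x1 y1], (curve th2) as [x2 y2]. simpl in *.
  apply unit_level_order; auto.
  unfold cross in C; simpl in C. rewrite C. apply Rdiv_ge0; auto.
Qed.

Lemma chord_dot_nonneg_quadrant al de : 0 <= al -> 0 <= de -> al + 2 * de <= PI / 2 ->
  0 <= chord_dot a b p al de.
Proof.
  intros h1 h2 h3. unfold chord_dot.
  destruct (curve_mono al (al + de) ltac:(lra) ltac:(lra)) as [m1 m2].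
  destruct (curve_mono al (al + 2 * de) ltac:(lra) ltac:(lra)) as [m3 m4].
  unfold dot, vsub; cbn [fst snd]. apply Rplus_le_le_0_compat; nra.
Qed.

(* Grid angles [i h] with [h = PI / (2 m)]: either the three points lie in the first
   quadrant, or the last ones are reflected back into it by [th |-> PI - th]. *)
Lemma chord_dot_nonneg_first (m i : nat) : (3 <= m)%nat -> (i < m)%nat ->
  0 <= chord_dot a b p (INR i * (PI / (2 * INR m))) (PI / INR m).
Proof.
  intros hm hi.
  assert (HM := INR_ge_3 m hm). assert (PI_pos := PI_RGT_0).
  set (h := PI / (2 * INR m)).
  assert (hh : 0 < h) by (apply Rdiv_lt_0_compat; lra).
  assert (Ede : PI / INR m = 2 * h) by (unfold h; field; lra).
  assert (Em : INR m * h = PI / 2) by (unfold h; field; lra).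
  assert (hI : INR i + 1 <= INR m) by (rewrite <- S_INR; apply le_INR; lia).
  assert (hI0 := pos_INR i).
  rewrite Ede. set (al := INR i * h).
  destruct (le_lt_dec (i + 4) m) as [c1|c1].
  - apply chord_dot_nonneg_quadrant; unfold al; [nra | lra |].
    assert (INR i + 4 <= INR m) by (replace 4 with (INR 4) by (simpl; ring); rewrite <- plus_INR; apply le_INR; auto).
    nra.
  - unfold chord_dot.
    assert (m = i + 3 \/ m = i + 2 \/ m = i + 1)%nat as [e|[e|e]] by lia;
      apply (f_equal INR) in e; rewrite plus_INR in e; simpl INR in e.
    + replace (al + 2 * h) with (PI / 2 - h) by (unfold al; nra).
      replace (al + 2 * (2 * h)) with (PI - (PI / 2 - h)) by (unfold al; nra).
      rewrite curve_PI_minus.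
      destruct (curve_mono al (PI / 2 - h) ltac:(unfold al; nra) ltac:(lra)) as [m1 m2].
      destruct (curve_nonneg (PI / 2 - h) ltac:(unfold al in *; nra)) as [q1 q2].
      destruct (curve_nonneg al ltac:(unfold al in *; nra)) as [q3 q4].
      unfold dot, vsub; cbn [fst snd]. nra.
    + assert (EM : al + 2 * h = PI - (al + 2 * h)) by (unfold al; nra).
      replace (al + 2 * (2 * h)) with (PI - al) by (unfold al; nra).
      rewrite curve_PI_minus.
      assert (Mx : fst (curve (al + 2 * h)) = 0).
      { assert (H0 := curve_PI_minus a b p (al + 2 * h)). rewrite <- EM in H0.
        assert (fst (curve (al + 2 * h)) = - fst (curve (al + 2 * h))) by (rewrite H0 at 1; reflexivity). lra. }
      unfold dot, vsub; cbn [fst snd]. rewrite Mx. nra.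
    + replace (al + 2 * h) with (PI - al) by (unfold al; nra).
      replace (al + 2 * (2 * h)) with (PI - (al - 2 * h)) by (unfold al; nra).
      rewrite !curve_PI_minus.
      assert (0 <= al - 2 * h) by (unfold al; nra).
      destruct (curve_mono (al - 2 * h) al ltac:(lra) ltac:(unfold al; nra)) as [m1 m2].
      destruct (curve_nonneg (al - 2 * h) ltac:(unfold al in *; nra)) as [q1 q2].
      destruct (curve_nonneg al ltac:(unfold al in *; nra)) as [q3 q4].
      unfold dot, vsub; cbn [fst snd]. nra.
Qed.

End Quadrant.

(* Rotation by [PI / 2] exchanges [a] and [b] and shifts the grid index by [m]. *)
Lemma chord_dot_nonneg p (m : nat) : 1 < p -> (3 <= m)%nat -> forall (i : nat) (a b : R),
  0 < a -> 0 < b -> 0 <= chord_dot a b p (INR i * (PI / (2 * INR m))) (PI / INR m).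
Proof.
  intros hp hm i. induction i as [i IH] using (well_founded_induction lt_wf). intros a b ha hb.
  destruct (le_lt_dec m i) as [c|c].
  - replace (INR i * (PI / (2 * INR m))) with (INR (i - m) * (PI / (2 * INR m)) + PI / 2)
      by (rewrite minus_INR by auto; field; apply not_0_INR; lia).
    rewrite chord_dot_rot. apply IH; auto. lia.
  - apply chord_dot_nonneg_first; auto.
Qed.

(** * The inscribed polygons *)

Section Polygon.
Variables a b p : R.
Hypothesis ha : 0 < a.
Hypothesis hb : 0 < b.
Hypothesis hp : 1 < p.

Notation F := (level a b p).
Notation V := (vertex a b p).

Lemma cross_vertex_pos m s : (3 <= m)%nat -> 0 < cross (V m s) (V m (S s)).
Proof.
  intro hm. rewrite !vertex_curve, (cross_curve a b p ha hb), angle_step by lia.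
  assert (Hb := angle_step_bounds m hm).
  apply Rdiv_lt_0_compat; [apply sin_gt_0; lra | apply Rmult_lt_0_compat; apply curve_norm_pos; auto].
Qed.

Lemma cone_decomp (m : nat) (z : R * R) : (3 <= m)%nat -> z <> (0, 0) ->
  exists s l mu, (s < m)%nat /\ 0 <= l /\ 0 <= mu /\ z = lincomb l mu (V m s) (V m (S s)).
Proof.
  intros hm hz. destruct z as [x y].
  destruct (polar x y hz) as [th [r [hth [hr [hx hy]]]]].
  destruct (angle_bracket m th ltac:(lia) hth) as [s [hs [hal hbe]]].
  set (al := angle m s) in *. set (be := angle m (S s)) in *.
  assert (hd : 0 < be - al < PI)
    by (unfold al, be; rewrite angle_step by lia; generalize (angle_step_bounds m hm); lra).
  assert (E := curve_decomp a b p ha hb al be th hd ltac:(lra)).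
  assert (hS : 0 < sin (be - al)) by (apply sin_gt_0; lra).
  assert (hA : 0 <= sin (be - th)) by (apply sin_ge_0; lra).
  assert (hB : 0 <= sin (th - al)) by (apply sin_ge_0; lra).
  assert (hNa := curve_norm_pos a b p ha hb al). assert (hNb := curve_norm_pos a b p ha hb be).
  assert (hNt := curve_norm_pos a b p ha hb th).
  set (l := sin (be - th) * curve_norm a b p al / (sin (be - al) * curve_norm a b p th)) in E.
  set (mu := sin (th - al) * curve_norm a b p be / (sin (be - al) * curve_norm a b p th)) in E.
  exists s, (r * curve_norm a b p th * l), (r * curve_norm a b p th * mu).
  split; [exact hs |].
  split; [apply Rmult_le_pos; [nra | apply Rdiv_ge0; [nra | apply Rmult_lt_0_compat; auto]] |].
  split; [apply Rmult_le_pos; [nra | apply Rdiv_ge0; [nra | apply Rmult_lt_0_compat; auto]] |].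
  rewrite !vertex_curve. fold al be.
  rewrite hx, hy. rewrite curve_eq in E. unfold lincomb in *. injection E as E1 E2.
  simpl. f_equal.
  - replace (cos th) with (cos th / curve_norm a b p th * curve_norm a b p th) by (field; lra).
    rewrite E1. ring.
  - replace (sin th) with (sin th / curve_norm a b p th * curve_norm a b p th) by (field; lra).
    rewrite E2. ring.
Qed.

(* [side m s z >= 0] iff [z] lies on the inner side of the line of the edge
   [P_s, P_{s+1}] of [P_{p,m}]; [inQ m] is the resulting half-plane description of
   the convex polygon [Q_{p,m}]. *)
Definition side (m s : nat) (z : R * R) : R := cross (vsub (V m (S s)) (V m s)) (vsub z (V m s)).
Definition inQ (m : nat) (z : R * R) : Prop := forall s, (s < m)%nat -> 0 <= side m s z.

Lemma side_origin m s : side m s (0, 0) = cross (V m s) (V m (S s)).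
Proof. unfold side, cross, vsub; simpl; ring. Qed.

Lemma side_vertex_l m s : side m s (V m s) = 0.
Proof. unfold side, cross, vsub; simpl; ring. Qed.

Lemma side_vertex_r m s : side m s (V m (S s)) = 0.
Proof. unfold side, cross, vsub; simpl; ring. Qed.

Lemma side_edge_lincomb m s l mu :
  side m s (lincomb l mu (V m s) (V m (S s))) = (1 - l - mu) * cross (V m s) (V m (S s)).
Proof. unfold side, cross, vsub, lincomb; simpl; ring. Qed.

Lemma side_lincomb m s l mu A B :
  side m s (lincomb l mu A B) = l * side m s A + mu * side m s B + (1 - l - mu) * side m s (0, 0).
Proof. unfold side, cross, vsub, lincomb; simpl; ring. Qed.

Lemma side_convex m s A B t :
  side m s (lincomb (1 - t) t A B) = (1 - t) * side m s A + t * side m s B.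
Proof. unfold side, cross, vsub, lincomb; simpl; ring. Qed.

Lemma inQ_level_le1 m z : (3 <= m)%nat -> inQ m z -> F z <= 1.
Proof.
  intros hm hq.
  destruct (classic (z = (0, 0))) as [->|hz]; [rewrite level_origin; lra |].
  destruct (cone_decomp m z hm hz) as [s [l [mu [hs [hl [hmu ->]]]]]].
  assert (hc := cross_vertex_pos m s hm). assert (H1 := hq s hs). rewrite side_edge_lincomb in H1.
  assert (l + mu <= 1) by (destruct (Rle_dec (l + mu) 1); auto; nra).
  eapply Rle_trans; [apply level_lincomb; auto |]. rewrite !(level_vertex a b p ha hb hp). lra.
Qed.

(* If [z] were on the outer side of the chord, the ray from the origin to [z] would
   meet the chord line at [q = k z], [0 < k <= 1]; then one of [X], [Y], [z] is a
   strict positive combination with total weight [<= 1] of the two others, which is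
   impossible on [C_p] by strict convexity. *)
Lemma chord_inner_strict X Y z : F X = 1 -> F Y = 1 -> F z = 1 -> 0 < cross X Y ->
  (forall l mu, 0 <= l -> 0 <= mu -> z <> lincomb l mu X Y) -> 0 < cross (vsub Y X) (vsub z X).
Proof.
  intros hX hY hz hc hnot.
  destruct (Rlt_le_dec 0 (cross (vsub Y X) (vsub z X))) as [H|H]; auto. exfalso.
  set (c := cross X Y) in *. set (L := cross (vsub Y X) (vsub z X)) in *.
  set (k := c / (c - L)).
  assert (hk : 0 < k <= 1) by (split; [apply Rdiv_lt_0_compat | apply Rdiv_le_1]; lra).
  set (q := (k * fst z, k * snd z)).
  assert (hXY : X <> Y) by (intro E; subst; unfold c, cross in hc; lra).
  assert (hq : cross (vsub Y X) (vsub q X) = 0).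
  { replace (cross (vsub Y X) (vsub q X)) with (k * (L - c) + c)
      by (unfold q, L, c, cross, vsub; simpl; ring).
    unfold k. field. lra. }
  destruct (collinear_lincomb X Y q hXY hq) as [nu Enu].
  unfold q, lincomb in Enu. injection Enu as Eq1 Eq2.
  assert (hzq : z = (/ k * fst q, / k * snd q)) by (unfold q; destruct z; simpl; f_equal; field; lra).
  destruct (Rle_lt_dec 0 nu) as [h0|h0]; [destruct (Rle_lt_dec nu 1) as [h1|h1] |].
  - apply (hnot ((1 - nu) / k) (nu / k)); [apply Rdiv_ge0; lra | apply Rdiv_ge0; lra |].
    destruct z. unfold lincomb; simpl in *. f_equal; field_simplify_eq; try lra; nra.
  - assert (hXz : X <> z).
    { intro E. apply (hnot 1 0); try lra. rewrite <- E. destruct X. unfold lincomb; simpl; f_equal; ring. }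
    assert (EY : Y = lincomb (1 - / nu) (k / nu) X z).
    { destruct X, Y, z; unfold lincomb; simpl in *. f_equal; field_simplify_eq; try lra; nra. }
    assert (hnu : 0 < / nu < 1)
      by (split; [apply Rinv_0_lt_compat | rewrite <- Rinv_1; apply Rinv_lt_contravar]; lra).
    assert (F Y < 1); [| lra].
    rewrite EY. apply level_lincomb_lt1; auto; try lra.
    + apply Rdiv_lt_0_compat; lra.
    + unfold Rdiv. nra.
  - assert (hzY : z <> Y).
    { intro E. apply (hnot 0 1); try lra. rewrite E. destruct Y. unfold lincomb; simpl; f_equal; ring. }
    assert (EX : X = lincomb (k / (1 - nu)) (- nu / (1 - nu)) z Y).
    { destruct X, Y, z; unfold lincomb; simpl in *. f_equal; field_simplify_eq; try lra; nra. }
    assert (F X < 1); [| lra].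
    rewrite EX. apply level_lincomb_lt1; auto; try (apply Rdiv_lt_0_compat; lra).
    replace (k / (1 - nu) + - nu / (1 - nu)) with ((k - nu) / (1 - nu)) by (field; lra).
    apply Rdiv_le_1; lra.
Qed.

Lemma finer_vertex_index m j s l mu : (3 <= m)%nat -> (j < 2 * m)%nat -> (s < m)%nat ->
  0 <= l -> 0 <= mu -> V (2 * m) j = lincomb l mu (V m s) (V m (S s)) ->
  j = (2 * s)%nat \/ j = (2 * s + 1)%nat \/ j = (2 * s + 2)%nat \/ (j = 0%nat /\ s = (m - 1)%nat).
Proof.
  intros hm hj hs hl hmu E.
  assert (hc := cross_vertex_pos m s hm).
  assert (c1 : 0 <= cross (V m s) (V (2 * m) j)) by (rewrite E, cross_lincomb_l; nra).
  assert (c2 : 0 <= cross (V (2 * m) j) (V m (S s))) by (rewrite E, cross_lincomb_r; nra).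
  rewrite !vertex_curve in c1, c2.
  apply (sin_nonneg_of_cross a b p ha hb) in c1. apply (sin_nonneg_of_cross a b p ha hb) in c2.
  assert (HM := INR_ge_3 m hm).
  apply (sector_index m j s hm hj hs).
  - replace (PI * (INR j - 2 * INR s) / INR m) with (angle (2 * m) j - angle m s); auto.
    unfold angle. rewrite mult_INR. simpl INR. field. lra.
  - replace (PI * (2 * INR s + 2 - INR j) / INR m) with (angle m (S s) - angle (2 * m) j); auto.
    unfold angle. rewrite mult_INR, S_INR. simpl INR. field. lra.
Qed.

Lemma side_finer_vertex_nonneg m t j : (3 <= m)%nat -> (t < m)%nat -> (j <= 2 * m)%nat ->
  j <> (2 * t + 1)%nat -> 0 <= side m t (V (2 * m) j).
Proof.
  intros hm ht.
  assert (Hlt : forall i, (i < 2 * m)%nat -> i <> (2 * t + 1)%nat -> 0 <= side m t (V (2 * m) i)).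
  { intros i hi hi1.
    destruct (classic (exists l mu, 0 <= l /\ 0 <= mu /\ V (2 * m) i = lincomb l mu (V m t) (V m (S t))))
      as [[l [mu [hl [hmu E]]]]|N].
    - destruct (finer_vertex_index m i t l mu hm hi ht hl hmu E) as [->|[->|[->|[-> ->]]]].
      + rewrite vertex_double, side_vertex_l by lia. lra.
      + lia.
      + replace (2 * t + 2)%nat with (2 * S t)%nat by lia. rewrite vertex_double, side_vertex_r by lia. lra.
      + replace 0%nat with (2 * 0)%nat by lia. rewrite vertex_double by lia.
        replace (V m 0) with (V m (S (m - 1))) by (replace (S (m - 1)) with m by lia; apply vertex_mm; lia).
        rewrite side_vertex_r. lra.
    - left. apply chord_inner_strict; try apply (level_vertex a b p ha hb hp).
      + apply cross_vertex_pos; auto.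
      + intros l mu hl hmu E. apply N. exists l, mu. auto. }
  intros hj hj1. destruct (Nat.eq_dec j (2 * m)) as [->|hj2].
  - rewrite vertex_mm by lia. apply Hlt; lia.
  - apply Hlt; lia.
Qed.

Lemma side_vertex_pos m s j : (3 <= m)%nat -> (s < m)%nat -> (j < m)%nat ->
  j <> s -> j <> S s -> (j + m <> S s)%nat -> 0 < side m s (V m j).
Proof.
  intros hm hs hj h1 h2 h3. apply chord_inner_strict; try apply (level_vertex a b p ha hb hp).
  - apply cross_vertex_pos; auto.
  - intros l mu hl hmu E. rewrite <- vertex_double in E by lia.
    destruct (finer_vertex_index m (2 * j) s l mu hm ltac:(lia) hs hl hmu E) as [e|[e|[e|[e1 e2]]]]; lia.
Qed.

Lemma side_vertex_nonneg m s j : (3 <= m)%nat -> (s < m)%nat -> (j <= m)%nat -> 0 <= side m s (V m j).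
Proof.
  intros hm hs hj. rewrite <- vertex_double by lia. apply side_finer_vertex_nonneg; lia.
Qed.

Lemma inQ_convex m A B t : inQ m A -> inQ m B -> 0 <= t <= 1 -> inQ m (lincomb (1 - t) t A B).
Proof. intros hA hB ht s hs. rewrite side_convex. generalize (hA s hs) (hB s hs). nra. Qed.

Lemma inQ_origin m : (3 <= m)%nat -> inQ m (0, 0).
Proof. intros hm s hs. rewrite side_origin. left. apply cross_vertex_pos; auto. Qed.

Lemma polygon_inQ m z : (3 <= m)%nat -> polygon a b p m z -> inQ m z.
Proof.
  intros hm [t [ht [s [hs ->]]]].
  apply inQ_convex; auto; intros s' hs'; apply side_vertex_nonneg; lia.
Qed.

Lemma polygon_level_le1 m z : (3 <= m)%nat -> polygon a b p m z -> F z <= 1.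
Proof. intros. apply (inQ_level_le1 m); auto. apply polygon_inQ; auto. Qed.

Lemma seg_level_le1 A B r : F A = 1 -> F B = 1 -> seg A B r -> F r <= 1.
Proof.
  intros hA hB [s [hs ->]].
  eapply Rle_trans; [apply level_lincomb; auto; lra |]. rewrite hA, hB. lra.
Qed.

Lemma side_new_vertex_neg m t : (3 <= m)%nat -> (t < m)%nat -> side m t (V (2 * m) (2 * t + 1)) < 0.
Proof.
  intros hm ht.
  assert (HM := INR_ge_3 m hm). assert (hpm := angle_step_bounds m hm).
  set (al := angle m t). set (be := angle m (S t)). set (th := angle (2 * m) (2 * t + 1)).
  assert (Ebe : be - al = 2 * (PI / INR m)) by (apply angle_step; lia).
  assert (Eth1 : th - al = PI / INR m)
    by (unfold th, al, angle; rewrite plus_INR, !mult_INR; simpl INR; field; lra).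
  assert (Eth2 : be - th = PI / INR m)
    by (unfold th, be, angle; rewrite S_INR, plus_INR, !mult_INR; simpl INR; field; lra).
  assert (E := curve_decomp a b p ha hb al be th ltac:(lra) ltac:(lra)).
  rewrite Eth1, Eth2 in E.
  set (l := sin (PI / INR m) * curve_norm a b p al / (sin (be - al) * curve_norm a b p th)) in E.
  set (mu := sin (PI / INR m) * curve_norm a b p be / (sin (be - al) * curve_norm a b p th)) in E.
  assert (hS : 0 < sin (be - al)) by (apply sin_gt_0; lra).
  assert (hS2 : 0 < sin (PI / INR m)) by (apply sin_gt_0; lra).
  assert (hNa := curve_norm_pos a b p ha hb al). assert (hNb := curve_norm_pos a b p ha hb be).
  assert (hNt := curve_norm_pos a b p ha hb th).
  assert (hl : 0 < l) by (apply Rdiv_lt_0_compat; apply Rmult_lt_0_compat; auto).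
  assert (hmu : 0 < mu) by (apply Rdiv_lt_0_compat; apply Rmult_lt_0_compat; auto).
  assert (EQ : V (2 * m) (2 * t + 1) = lincomb l mu (V m t) (V m (S t))) by (rewrite !vertex_curve; exact E).
  assert (hc := cross_vertex_pos m t hm).
  assert (hne : V m t <> V m (S t)) by (intro H'; rewrite H' in hc; unfold cross in hc; lra).
  assert (1 < l + mu).
  { destruct (Rlt_le_dec 1 (l + mu)); auto. exfalso.
    assert (F (lincomb l mu (V m t) (V m (S t))) < 1)
      by (apply level_lincomb_lt1; auto; apply (level_vertex a b p ha hb hp)).
    rewrite <- EQ, (level_vertex a b p ha hb hp) in H. lra. }
  rewrite EQ, side_edge_lincomb. nra.
Qed.

Lemma next_edge m s : (3 <= m)%nat -> (s < m)%nat ->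
  exists s', (s' < m)%nat /\ V m s' = V m (S s) /\ 0 < side m s' (V m s).
Proof.
  intros hm hs. destruct (Nat.eq_dec (S s) m) as [e|e].
  - exists 0%nat. rewrite e, vertex_mm by lia. repeat split; [lia | apply side_vertex_pos; lia].
  - exists (S s). repeat split; [lia | apply side_vertex_pos; lia].
Qed.

Lemma prev_edge m t : (3 <= m)%nat -> (t < m)%nat ->
  exists tm, (tm < m)%nat /\ V m (S tm) = V m t /\ V m tm = V m (t + m - 1) /\
    V (2 * m) (2 * t + 2 * m - 1) = V (2 * m) (2 * tm + 1) /\ 0 < side m tm (V m (S t)).
Proof.
  intros hm ht. destruct t as [|t0].
  - exists (m - 1)%nat. replace (S (m - 1)) with m by lia. rewrite vertex_mm by lia.
    split; [lia |]. split; [reflexivity |]. split; [f_equal; lia |]. split; [f_equal; lia |].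
    apply side_vertex_pos; lia.
  - exists t0. split; [lia |]. split; [reflexivity |]. split; [| split].
    + replace (S t0 + m - 1)%nat with (t0 + m)%nat by lia. rewrite vertex_period by lia. reflexivity.
    + replace (2 * S t0 + 2 * m - 1)%nat with ((2 * t0 + 1) + 2 * m)%nat by lia. apply vertex_period. lia.
    + destruct (Nat.eq_dec (S (S t0)) m) as [e|e].
      * rewrite e, vertex_mm by lia. apply side_vertex_pos; lia.
      * apply side_vertex_pos; lia.
Qed.

Lemma inQ_side0_seg m s r : (3 <= m)%nat -> (s < m)%nat -> inQ m r -> side m s r = 0 ->
  seg (V m s) (V m (S s)) r.
Proof.
  intros hm hs hq hl.
  assert (hc := cross_vertex_pos m s hm).
  assert (hne : V m s <> V m (S s)) by (intro H'; rewrite H' in hc; unfold cross in hc; lra).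
  destruct (collinear_lincomb _ _ r hne hl) as [nu ->].
  exists nu. split; auto.
  destruct (Rle_lt_dec 0 nu) as [h0|h0]; [destruct (Rle_lt_dec nu 1) as [h1|h1] |]; [lra | exfalso ..].
  - destruct (next_edge m s hm hs) as [s' [hs' [E Hpos]]].
    assert (H := hq s' hs'). rewrite side_convex, <- E, side_vertex_l in H. nra.
  - destruct (prev_edge m s hm hs) as [s' [hs' [E [_ [_ Hpos]]]]].
    assert (H := hq s' hs'). rewrite side_convex, <- E, side_vertex_r in H. nra.
Qed.

(* Along the segment from [xs] (outside some edge line) to [q] in [Q_{p,m}], the last
   exit parameter [T = max_s tau_s] from the outer half-planes gives a point of [Q_{p,m}]
   on an edge line, hence on [P_{p,m}]. *)
Lemma polygon_crossing m xs q : (3 <= m)%nat -> (exists s, (s < m)%nat /\ side m s xs < 0) -> inQ m q ->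
  exists r, polygon a b p m r /\ sqdist xs r <= sqdist xs q.
Proof.
  intros hm [s1 [hs1 hx1]] hq.
  set (tau := fun s => if Rlt_dec (side m s xs) 0 then side m s xs / (side m s xs - side m s q) else 0).
  assert (tau_eq : forall s, (s < m)%nat -> side m s xs < 0 ->
             tau s = (- side m s xs) / (- side m s xs + side m s q)).
  { intros s hs h. unfold tau. destruct (Rlt_dec (side m s xs) 0); [| contradiction].
    assert (0 <= side m s q) by (apply hq; auto). field. lra. }
  assert (tau_rng : forall s, (s < m)%nat -> 0 <= tau s <= 1).
  { intros s hs. destruct (Rlt_dec (side m s xs) 0) as [h|h].
    - rewrite tau_eq by auto. assert (0 <= side m s q) by (apply hq; auto).
      split; [apply Rdiv_ge0 | apply Rdiv_le_1]; lra.
    - unfold tau. destruct (Rlt_dec (side m s xs) 0); [contradiction | lra]. }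
  destruct (finite_argmax tau m ltac:(lia)) as [s0 [hs0 Hmax]].
  set (T := tau s0).
  assert (hT1 : 0 < tau s1).
  { rewrite tau_eq by auto. assert (0 <= side m s1 q) by (apply hq; auto). apply Rdiv_lt_0_compat; lra. }
  assert (hT : 0 < T <= 1) by (specialize (Hmax s1 hs1); specialize (tau_rng s0 hs0); unfold T; lra).
  assert (hx0 : side m s0 xs < 0).
  { destruct (Rlt_dec (side m s0 xs) 0) as [h|h]; auto.
    unfold T, tau in hT. destruct (Rlt_dec (side m s0 xs) 0); [contradiction | lra]. }
  set (r := lincomb (1 - T) T xs q).
  exists r. split.
  - assert (hr : inQ m r).
    { intros s hs. unfold r. rewrite side_convex.
      assert (0 <= side m s q) by (apply hq; auto).
      destruct (Rlt_dec (side m s xs) 0) as [h|h]; [| nra].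
      assert (Hs := Hmax s hs). rewrite tau_eq in Hs by auto.
      assert (- side m s xs <= T * (- side m s xs + side m s q)); [| nra].
      apply Rmult_le_reg_r with (/ (- side m s xs + side m s q)); [apply Rinv_0_lt_compat; lra |].
      rewrite Rmult_assoc, Rinv_r by lra. unfold Rdiv in Hs. fold T in Hs. lra. }
    assert (hl0 : side m s0 r = 0).
    { unfold r. rewrite side_convex. unfold T. rewrite tau_eq by auto.
      assert (0 <= side m s0 q) by (apply hq; auto). field. lra. }
    exists s0. split; auto. apply inQ_side0_seg; auto.
  - unfold r. rewrite sqdist_lincomb. assert (0 <= sqdist xs q) by apply sqdist_ge0.
    assert (T ^ 2 <= 1) by nra. nra.
Qed.

Lemma outside_side_neg m xs : (3 <= m)%nat -> 1 < F xs -> exists s, (s < m)%nat /\ side m s xs < 0.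
Proof.
  intros hm hx. apply NNPP. intro N.
  assert (inQ m xs); [| assert (F xs <= 1) by (apply (inQ_level_le1 m); auto); lra].
  intros s hs. destruct (Rle_lt_dec 0 (side m s xs)); auto. exfalso. apply N. exists s; auto.
Qed.

(* The projection [w] of an outer point onto [P_{p,m}] is also its projection onto
   [Q_{p,m}]: a point of [Q_{p,m}] closer to [xs] near [w] would yield, by
   [polygon_crossing], a point of [P_{p,m}] closer than [w]. *)
Lemma inQ_obtuse m xs w z : (3 <= m)%nat -> 1 < F xs -> is_proj (polygon a b p m) xs w -> inQ m z ->
  dot (vsub z w) (vsub xs w) <= 0.
Proof.
  intros hm hx Hw hz. apply is_proj_sqdist in Hw as [hw hopt].
  destruct (Rle_lt_dec (dot (vsub z w) (vsub xs w)) 0) as [h|h]; auto. exfalso.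
  set (hh := dot (vsub z w) (vsub xs w)) in *.
  set (DD := sqdist z w).
  assert (hD : 0 < DD).
  { destruct (sqdist_ge0 z w) as [h'|h']; auto.
    symmetry in h'. apply sqdist_eq0 in h'. subst z. unfold hh, dot, vsub in h. simpl in h. lra. }
  set (eps := Rmin 1 (hh / DD)).
  assert (he : 0 < eps <= 1) by (split; [apply Rmin_pos; [lra | apply Rdiv_lt_0_compat; lra] | apply Rmin_l]).
  assert (heD : eps * DD <= hh).
  { assert (eps <= hh / DD) by apply Rmin_r.
    apply Rmult_le_reg_r with (/ DD); [apply Rinv_0_lt_compat; lra |].
    rewrite Rmult_assoc, Rinv_r by lra. unfold Rdiv in *. lra. }
  set (q := lincomb (1 - eps) eps w z).
  assert (hq : inQ m q) by (apply inQ_convex; auto; [apply polygon_inQ; auto | lra]).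
  assert (Eq : sqdist xs q = sqdist xs w - 2 * eps * hh + eps ^ 2 * DD)
    by (unfold q, hh, DD, sqdist, dot, vsub, lincomb; simpl; ring).
  destruct (polygon_crossing m xs q hm (outside_side_neg m xs hm hx) hq) as [r [hr hdr]].
  specialize (hopt r hr). nra.
Qed.

Lemma inQ_refine m z : (3 <= m)%nat -> inQ m z -> inQ (2 * m) z.
Proof.
  intros hm hq.
  destruct (classic (z = (0, 0))) as [->|hz]; [apply inQ_origin; lia |].
  destruct (cone_decomp m z hm hz) as [s [l [mu [hs [hl [hmu ->]]]]]].
  assert (hc := cross_vertex_pos m s hm).
  assert (H1 := hq s hs). rewrite side_edge_lincomb in H1.
  assert (l + mu <= 1) by (destruct (Rle_dec (l + mu) 1); auto; nra).
  intros s' hs'. rewrite side_lincomb.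
  assert (0 <= side (2 * m) s' (V m s))
    by (rewrite <- (vertex_double a b p m s) by lia; apply side_vertex_nonneg; lia).
  assert (0 <= side (2 * m) s' (V m (S s)))
    by (rewrite <- (vertex_double a b p m (S s)) by lia; apply side_vertex_nonneg; lia).
  assert (0 <= side (2 * m) s' (0, 0)) by (apply inQ_origin; lia).
  nra.
Qed.

Lemma finer_edge_side_nonneg m t j z : (3 <= m)%nat -> (t < m)%nat -> (j < 2 * m)%nat ->
  j <> (2 * t)%nat -> j <> (2 * t + 1)%nat -> seg (V (2 * m) j) (V (2 * m) (S j)) z -> 0 <= side m t z.
Proof.
  intros hm ht hj h1 h2 hz. apply seg_lincomb in hz as [s [hs ->]]. rewrite side_convex.
  assert (0 <= side m t (V (2 * m) j)) by (apply side_finer_vertex_nonneg; lia).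
  assert (0 <= side m t (V (2 * m) (S j))) by (apply side_finer_vertex_nonneg; lia).
  nra.
Qed.

Lemma acute_next m t : (3 <= m)%nat -> (t < m)%nat ->
  0 <= dot (vsub (V (2 * m) (2 * t + 1)) (V m t)) (vsub (V m (S t)) (V m t)).
Proof.
  intros hm ht. assert (HM := INR_ge_3 m hm).
  assert (H := chord_dot_nonneg p m hp hm (4 * t) a b ha hb). unfold chord_dot in H.
  rewrite !vertex_curve.
  replace (angle (2 * m) (2 * t + 1)) with (INR (4 * t) * (PI / (2 * INR m)) + PI / INR m).
  replace (angle m (S t)) with (INR (4 * t) * (PI / (2 * INR m)) + 2 * (PI / INR m)).
  replace (angle m t) with (INR (4 * t) * (PI / (2 * INR m))). exact H.
  all: unfold angle; rewrite ?S_INR, ?plus_INR, ?mult_INR; simpl INR; field; lra.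
Qed.

(* The reflection [th |-> -th] maps the grid to itself and reverses orientation. *)
Lemma acute_prev m t : (3 <= m)%nat -> (t < m)%nat ->
  0 <= dot (vsub (V (2 * m) (2 * t + 2 * m - 1)) (V m t)) (vsub (V m (t + m - 1)) (V m t)).
Proof.
  intros hm ht. assert (HM := INR_ge_3 m hm).
  assert (H := chord_dot_nonneg p m hp hm (4 * m - 4 * t) a b ha hb). unfold chord_dot in H.
  set (al := angle m t).
  replace (INR (4 * m - 4 * t) * (PI / (2 * INR m))) with (- al + 2 * INR 1 * PI) in H
    by (unfold al, angle; rewrite minus_INR, !mult_INR by lia; simpl INR; field; lra).
  replace (- al + 2 * INR 1 * PI + PI / INR m) with (- (al - PI / INR m) + 2 * INR 1 * PI) in H by ring.
  replace (- al + 2 * INR 1 * PI + 2 * (PI / INR m)) with (- (al - 2 * (PI / INR m)) + 2 * INR 1 * PI) in H by ring.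
  rewrite !curve_shift, !curve_opp in H.
  rewrite !vertex_curve. fold al.
  replace (angle (2 * m) (2 * t + 2 * m - 1)) with ((al - PI / INR m) + 2 * INR 1 * PI).
  replace (angle m (t + m - 1)) with ((al - 2 * (PI / INR m)) + 2 * INR 1 * PI).
  { rewrite !curve_shift. unfold dot, vsub in *; simpl in *. lra. }
  all: unfold al, angle; rewrite minus_INR by lia; rewrite ?plus_INR, ?mult_INR; simpl INR; field; lra.
Qed.

(** * The refinement step *)

Lemma proj_seg_min m xs t s : (t < m)%nat ->
  is_proj (polygon a b p m) xs (lincomb (1 - s) s (V m t) (V m (S t))) ->
  seg_min xs (V m t) (V m (S t)) s.
Proof.
  intros ht Hw s' hs'. apply is_proj_sqdist in Hw as [_ Ho].
  apply Ho. exists t. split; [exact ht |]. exists s'. split; [exact hs' | reflexivity].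
Qed.

(* Projection from the relative interior of the edge [W0, W1]: [xs - w] is an outer
   normal of the edge, so [w] is nearest to [xs] in the whole inner half-plane, and the
   ray from [w] towards [xs] leaves the triangle [W0 M W1] through its new edges. *)
Lemma relint_refine m t s xs x' : (3 <= m)%nat -> (t < m)%nat -> 0 < s < 1 -> 1 < F xs ->
  is_proj (polygon a b p m) xs (lincomb (1 - s) s (V m t) (V m (S t))) ->
  nearer_proj (seg (V (2 * m) (2 * t)) (V (2 * m) (2 * t + 1)))
              (seg (V (2 * m) (2 * t + 1)) (V (2 * m) (2 * t + 2))) xs x' ->
  is_proj (polygon a b p (2 * m)) xs x'.
Proof.
  intros hm ht hs hx Hw Hnear.
  apply nearer_proj_spec in Hnear as [Hx' Hbest].
  assert (Hmin := proj_seg_min m xs t s ht Hw).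
  assert (hw1 : F (lincomb (1 - s) s (V m t) (V m (S t))) <= 1)
    by (apply (polygon_level_le1 m); [auto | apply Hw]).
  assert (hO : 0 < side m t (0, 0)) by (rewrite side_origin; apply cross_vertex_pos; auto).
  assert (hOd : dot (vsub (0, 0) (lincomb (1 - s) s (V m t) (V m (S t))))
                    (vsub xs (lincomb (1 - s) s (V m t) (V m (S t)))) <= 0)
    by (apply (inQ_obtuse m); auto; apply inQ_origin; auto).
  assert (hM := side_new_vertex_neg m t hm ht).
  assert (QW0 : V (2 * m) (2 * t) = V m t) by (apply vertex_double; lia).
  assert (QW1 : V (2 * m) (2 * t + 2) = V m (S t))
    by (replace (2 * t + 2)%nat with (2 * S t)%nat by lia; apply vertex_double; lia).
  rewrite QW0, QW1 in Hx', Hbest.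
  set (W0 := V m t) in *. set (W1 := V m (S t)) in *. set (M := V (2 * m) (2 * t + 1)) in *.
  set (w := lincomb (1 - s) s W0 W1) in *.
  assert (hW : W0 <> W1).
  { intro E. rewrite side_origin in hO. fold W0 W1 in hO. rewrite E in hO. unfold cross in hO. lra. }
  assert (hxw : xs <> w) by (intro E; rewrite <- E in hw1; lra).
  destruct (outer_normal W0 W1 xs s hs (0, 0) hW Hmin hxw hO hOd) as [Hdot Hc].
  destruct (ray_closer W0 W1 xs s hs M hM Hc) as [r [Hr Hrw]].
  { intros r l Hr hl E.
    assert (F r <= 1)
      by (destruct Hr as [Hr | Hr]; eapply seg_level_le1; eauto; apply (level_vertex a b p ha hb hp)).
    assert (F xs <= 1); [| lra].
    rewrite E. eapply Rle_trans; [apply level_lincomb; auto; lra |]. fold w. nra. }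
  apply is_proj_sqdist. split.
  - destruct Hx' as [h | h]; [exists (2 * t)%nat | exists (2 * t + 1)%nat]; (split; [lia |]).
    + replace (S (2 * t)) with (2 * t + 1)%nat by lia. rewrite QW0. exact h.
    + replace (S (2 * t + 1)) with (2 * t + 2)%nat by lia. rewrite QW1. exact h.
  - intros z [j [hj hz]].
    destruct (Nat.eq_dec j (2 * t)) as [->|h1].
    { apply Hbest. left. replace (S (2 * t)) with (2 * t + 1)%nat in hz by lia. rewrite QW0 in hz. exact hz. }
    destruct (Nat.eq_dec j (2 * t + 1)) as [->|h2].
    { apply Hbest. right. replace (S (2 * t + 1)) with (2 * t + 2)%nat in hz by lia. rewrite QW1 in hz. exact hz. }
    assert (Lz := finer_edge_side_nonneg m t j z hm ht hj h1 h2 hz).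
    eapply Rle_trans; [apply Hbest; exact Hr |]. eapply Rle_trans; [exact Hrw |].
    apply (halfplane_min W0 W1 xs s z hW Hdot Hc Lz).
Qed.

(* At a vertex [W = P_t] with predecessor [A = P_tm], the first-order conditions along
   both edges put every other vertex of [P_{p,2m}] in the obtuse cone at [W]. *)
Lemma vertex_cone m t tm xs : (3 <= m)%nat -> (t < m)%nat -> (tm < m)%nat ->
  V m (S tm) = V m t -> 0 < side m tm (V m (S t)) -> is_proj (polygon a b p m) xs (V m t) ->
  forall i, (i <= 2 * m)%nat -> i <> (2 * t + 1)%nat -> i <> (2 * tm + 1)%nat ->
    dot (vsub (V (2 * m) i) (V m t)) (vsub xs (V m t)) <= 0.
Proof.
  intros hm ht htm E1 hturn Hw i hi h1 h2.
  assert (hB : dot (vsub (V m (S t)) (V m t)) (vsub xs (V m t)) <= 0).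
  { assert (Hmin : seg_min xs (V m t) (V m (S t)) 0) by (apply proj_seg_min; [auto | rewrite lincomb_0; exact Hw]).
    assert (H := seg_min_obtuse_r xs (V m t) (V m (S t)) 0 ltac:(lra) Hmin).
    rewrite lincomb_0 in H. exact H. }
  assert (hA : dot (vsub (V m tm) (V m t)) (vsub xs (V m t)) <= 0).
  { rewrite <- E1 in Hw |- *.
    assert (Hmin : seg_min xs (V m tm) (V m (S tm)) 1) by (apply proj_seg_min; [auto | rewrite lincomb_1; exact Hw]).
    assert (H := seg_min_obtuse_l xs (V m tm) (V m (S tm)) 1 ltac:(lra) Hmin).
    rewrite lincomb_1 in H. exact H. }
  apply (cone_obtuse (V m tm) (V m t) (V m (S t))); auto.
  - unfold side in hturn. rewrite E1 in hturn.
    replace (cross (vsub (V m t) (V m tm)) (vsub (V m (S t)) (V m t)))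
      with (cross (vsub (V m t) (V m tm)) (vsub (V m (S t)) (V m tm))) by (unfold cross, vsub; simpl; ring).
    exact hturn.
  - assert (H := side_finer_vertex_nonneg m tm i hm htm hi h2). unfold side in H. rewrite E1 in H. exact H.
  - exact (side_finer_vertex_nonneg m t i hm ht hi h1).
Qed.

(* Projection at a vertex [W = P_t]: the new edges [M', W], [W, M] are compared with all
   others through the obtuse cone at [W], except the edges [A, M'] and [M, B], which are
   handled by the acute angle at [W] in the triangles [A W M'] and [W M B]. *)
Lemma vertex_refine m t xs x' : (3 <= m)%nat -> (t < m)%nat -> 1 < F xs ->
  is_proj (polygon a b p m) xs (V m t) ->
  nearer_proj (seg (V (2 * m) (2 * t + 2 * m - 1)) (V (2 * m) (2 * t)))
              (seg (V (2 * m) (2 * t)) (V (2 * m) (2 * t + 1))) xs x' ->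
  is_proj (polygon a b p (2 * m)) xs x'.
Proof.
  intros hm ht hx Hw Hnear.
  destruct (prev_edge m t hm ht) as [tm [htm [E1 [E2 [E3 hturn]]]]].
  assert (Hcone := vertex_cone m t tm xs hm ht htm E1 hturn Hw).
  apply nearer_proj_spec in Hnear as [Hx' Hbest].
  assert (AC1 := acute_next m t hm ht).
  assert (AC2 := acute_prev m t hm ht). rewrite E3, <- E2 in AC2.
  assert (QW : V (2 * m) (2 * t) = V m t) by (apply vertex_double; lia).
  assert (QW' : V (2 * m) (2 * tm + 2) = V m t)
    by (replace (2 * tm + 2)%nat with (2 * S tm)%nat by lia; rewrite vertex_double by lia; exact E1).
  assert (QB : V (2 * m) (2 * t + 2) = V m (S t))
    by (replace (2 * t + 2)%nat with (2 * S t)%nat by lia; apply vertex_double; lia).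
  assert (QA : V (2 * m) (2 * tm) = V m tm) by (apply vertex_double; lia).
  rewrite E3, QW in Hx', Hbest.
  assert (hB := Hcone (2 * t + 2)%nat ltac:(lia) ltac:(lia) ltac:(lia)). rewrite QB in hB.
  assert (hA := Hcone (2 * tm)%nat ltac:(lia) ltac:(lia) ltac:(lia)). rewrite QA in hA.
  set (W := V m t) in *. set (A := V m tm) in *. set (B := V m (S t)) in *.
  set (M := V (2 * m) (2 * t + 1)) in *. set (M' := V (2 * m) (2 * tm + 1)) in *.
  assert (HW : sqdist xs x' <= sqdist xs W) by (apply Hbest; right; apply seg_left).
  apply is_proj_sqdist. split.
  - destruct Hx' as [h | h]; [exists (2 * tm + 1)%nat | exists (2 * t)%nat]; (split; [lia |]).
    + replace (S (2 * tm + 1)) with (2 * tm + 2)%nat by lia. rewrite QW'. exact h.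
    + replace (S (2 * t)) with (2 * t + 1)%nat by lia. rewrite QW. exact h.
  - intros z [j [hj hz]].
    destruct (Nat.eq_dec j (2 * t)) as [->|e0].
    { apply Hbest. right. replace (S (2 * t)) with (2 * t + 1)%nat in hz by lia. rewrite QW in hz. exact hz. }
    destruct (Nat.eq_dec j (2 * tm + 1)) as [->|e1].
    { apply Hbest. left. replace (S (2 * tm + 1)) with (2 * tm + 2)%nat in hz by lia. rewrite QW' in hz. exact hz. }
    apply seg_lincomb in hz as [s [hs ->]].
    destruct (Nat.eq_dec j (2 * t + 1)) as [->|e2].
    { replace (S (2 * t + 1)) with (2 * t + 2)%nat by lia. rewrite QB. fold M.
      eapply Rle_trans; [| apply (sqdist_acute_compare xs W M B s); auto].
      apply Hbest. right. apply seg_sym. exists s. split; [exact hs | reflexivity]. }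
    destruct (Nat.eq_dec j (2 * tm)) as [->|e3].
    { replace (S (2 * tm)) with (2 * tm + 1)%nat by lia. rewrite QA. fold M'. rewrite lincomb_swap.
      eapply Rle_trans; [| apply (sqdist_acute_compare xs W M' A (1 - s)); auto; lra].
      apply Hbest. left. exists (1 - s). split; [lra | reflexivity]. }
    eapply Rle_trans; [exact HW |].
    apply sqdist_le_seg_of_obtuse; auto; apply Hcone; lia.
Qed.

Lemma refine_step_is_proj m xs w x' : (3 <= m)%nat -> 1 < F xs ->
  is_proj (polygon a b p m) xs w -> refine_step a b p m xs w x' ->
  is_proj (polygon a b p (2 * m)) xs x'.
Proof.
  intros hm hx Hw [Hrel Hvert].
  assert (Hw' := Hw). destruct Hw' as [[t [ht hwt]] _].
  apply seg_lincomb in hwt as [s [hs ->]].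
  destruct (Req_dec s 0) as [->|e0]; [| destruct (Req_dec s 1) as [->|e1]].
  - rewrite lincomb_0 in Hw, Hvert. apply (vertex_refine m t); auto.
  - rewrite lincomb_1 in Hw, Hvert.
    destruct (Nat.eq_dec (S t) m) as [e|e].
    + rewrite e, vertex_mm in Hw, Hvert by lia.
      apply (vertex_refine m 0); auto; [lia |]. apply Hvert; [lia | reflexivity].
    + apply (vertex_refine m (S t)); auto; [lia |]. apply Hvert; [lia | reflexivity].
  - apply (relint_refine m t s); auto; [lra |].
    apply Hrel; auto. exists s. split; [lra | reflexivity].
Qed.

(** * Convergence *)

Lemma iterates_proj k xs (x : nat -> R * R) : (3 <= k)%nat -> 1 < F xs ->
  is_proj (polygon a b p k) xs (x 1%nat) ->
  (forall n, (1 <= n)%nat -> refine_step a b p (2 ^ (n - 1) * k) xs (x n) (x (S n))) ->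
  forall n, (1 <= n)%nat -> is_proj (polygon a b p (2 ^ (n - 1) * k)) xs (x n).
Proof.
  intros hk hx H1 Hstep. induction n as [|n IH]; intro hn; [lia |].
  destruct (Nat.eq_dec n 0) as [->|hn0]; [simpl; rewrite Nat.add_0_r; exact H1 |].
  replace (2 ^ (S n - 1) * k)%nat with (2 * (2 ^ (n - 1) * k))%nat
    by (replace (S n - 1)%nat with (S (n - 1)) by lia; rewrite Nat.pow_succ_r'; lia).
  apply (refine_step_is_proj _ _ (x n)); [apply pow2_mul_ge3; auto | auto | apply IH; lia | apply Hstep; lia].
Qed.

Section Iterates.
Variable k : nat.
Hypothesis hk : (3 <= k)%nat.
Variable xs : R * R.
Hypothesis hxs : 1 < F xs.
Variable x : nat -> R * R.
Hypothesis Hproj : forall n, (1 <= n)%nat -> is_proj (polygon a b p (2 ^ (n - 1) * k)) xs (x n).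

Lemma iterate_inQ n n' : (1 <= n)%nat -> (n <= n')%nat -> inQ (2 ^ (n' - 1) * k) (x n).
Proof.
  intros h1 h2. induction h2 as [|n' h2 IH].
  - apply polygon_inQ; [apply pow2_mul_ge3; auto | apply Hproj; auto].
  - replace (2 ^ (S n' - 1) * k)%nat with (2 * (2 ^ (n' - 1) * k))%nat
      by (replace (S n' - 1)%nat with (S (n' - 1)) by lia; rewrite Nat.pow_succ_r'; lia).
    apply inQ_refine; auto. apply pow2_mul_ge3; auto.
Qed.

(* [x n] lies in [Q] of every later polygon, whose projection [x n'] therefore sees it
   at an obtuse angle. *)
Lemma iterate_sqdist_decrease n n' : (1 <= n)%nat -> (n <= n')%nat ->
  sqdist xs (x n') + sqdist (x n) (x n') <= sqdist xs (x n).
Proof.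
  intros h1 h2.
  assert (H := inQ_obtuse _ xs (x n') (x n) (pow2_mul_ge3 k (n' - 1) hk) hxs (Hproj n' ltac:(lia))
                 (iterate_inQ n n' h1 h2)).
  rewrite (sqdist_expand xs (x n') (x n)). lra.
Qed.

Lemma iterate_coord_cauchy (f : R * R -> R) : f = fst \/ f = snd -> Cauchy_crit (fun j => f (x (S j))).
Proof.
  intros hf.
  set (D := fun j => sqdist xs (x (S j))).
  assert (HD : Cauchy_crit D).
  { apply CV_Cauchy, decreasing_cv.
    - intro j. unfold D. generalize (iterate_sqdist_decrease (S j) (S (S j)) ltac:(lia) ltac:(lia))
        (sqdist_ge0 (x (S j)) (x (S (S j)))). lra.
    - exists 0. intros r [j ->]. unfold opp_seq, D. generalize (sqdist_ge0 xs (x (S j))). lra. }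
  assert (Hbound : forall j j', (j <= j')%nat -> (f (x (S j)) - f (x (S j'))) ^ 2 <= Rabs (D j - D j')).
  { intros j j' h. assert (H := iterate_sqdist_decrease (S j) (S j') ltac:(lia) ltac:(lia)).
    assert (H0 := sqdist_ge0 (x (S j)) (x (S j'))). unfold D. rewrite Rabs_pos_eq by lra.
    unfold sqdist in *. generalize (pow2_ge_0 (fst (x (S j)) - fst (x (S j'))))
      (pow2_ge_0 (snd (x (S j)) - snd (x (S j')))). destruct hf as [-> | ->]; lra. }
  intros eps he. destruct (HD (eps ^ 2) ltac:(nra)) as [N HN].
  exists N. intros j j' hj hj'. unfold Rdist.
  assert (Hle : forall i i', (N <= i)%nat -> (N <= i')%nat -> (i <= i')%nat ->
            Rabs (f (x (S i)) - f (x (S i'))) < eps).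
  { intros i i' hi hi' hii. assert (Hb := Hbound i i' hii). specialize (HN i i' hi hi'). unfold Rdist in HN.
    rewrite <- (Rabs_pos_eq eps) by lra. apply Rsqr_lt_abs_0. unfold Rsqr. nra. }
  destruct (le_lt_dec j j'); [apply Hle; auto | rewrite Rabs_minus_sym; apply Hle; auto; lia].
Qed.

Lemma iterates_coord_converge : exists y, coord_converges x y.
Proof.
  destruct (R_complete _ (iterate_coord_cauchy fst ltac:(auto))) as [l1 H1].
  destruct (R_complete _ (iterate_coord_cauchy snd ltac:(auto))) as [l2 H2].
  exists (l1, l2). intros eps he. destruct (H1 eps he) as [N1 h1]. destruct (H2 eps he) as [N2 h2].
  exists (S (N1 + N2)). intros [|n] hn; [lia |]. simpl.
  split; [apply (h1 n) | apply (h2 n)]; lia.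
Qed.

Variable y : R * R.
Hypothesis Hy : coord_converges x y.

Lemma limit_below_iterates n : (1 <= n)%nat -> sqdist xs y <= sqdist xs (x n).
Proof.
  intros hn. apply Rle_plus_epsilon. intros eps he.
  destruct (sqdist_continuous xs y eps he) as [rho [hr Hr]].
  destruct (Hy rho hr) as [N HN].
  destruct (HN (n + N)%nat ltac:(lia)) as [c1 c2].
  specialize (Hr (x (n + N)%nat) c1 c2).
  assert (H := iterate_sqdist_decrease n (n + N) hn ltac:(lia)).
  assert (H0 := sqdist_ge0 (x n) (x (n + N)%nat)).
  assert (sqdist xs y - sqdist xs (x (n + N)%nat) < eps)
    by (rewrite Rabs_minus_sym in Hr; eapply Rle_lt_trans; [apply Rle_abs | exact Hr]).
  lra.
Qed.

Lemma limit_level_le1 : F y <= 1.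
Proof.
  destruct (Rle_lt_dec (F y) 1) as [h|h]; auto. exfalso.
  destruct (level_continuous a b p ha hb hp (fst y) (snd y) (F y - 1) ltac:(lra)) as [del [hd Hd]].
  destruct (Hy del hd) as [N HN]. destruct (HN (S N) ltac:(lia)) as [c1 c2].
  specialize (Hd _ _ c1 c2).
  assert (F (x (S N)) <= 1)
    by (apply (polygon_level_le1 (2 ^ (S N - 1) * k)); [apply pow2_mul_ge3; auto | apply Hproj; lia]).
  destruct y as [y1 y2], (x (S N)) as [u1 u2]. simpl in *.
  assert (Rabs (F (u1, u2) - F (y1, y2)) >= F (y1, y2) - 1)
    by (rewrite Rabs_minus_sym, Rabs_pos_eq; lra).
  lra.
Qed.

(* Every point of [C_p] is approximated by vertices of the finer and finer polygons,
   each of which is farther from [xs] than the corresponding iterate. *)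
Lemma limit_min_on_curve z : F z = 1 -> sqdist xs y <= sqdist xs z.
Proof.
  intros hz. apply Rle_plus_epsilon. intros eta he.
  destruct (level1_curve a b p ha hb hp z hz) as [th [hth ->]].
  destruct (sqdist_continuous xs (curve a b p th) eta he) as [rho [hr Hr]].
  destruct (curve_continuous a b p ha hb hp th rho hr) as [del [hd Hd]].
  assert (PI_pos := PI_RGT_0).
  destruct (INR_unbounded (2 * PI / del)) as [N hN].
  set (m := (2 ^ (S N - 1) * k)%nat).
  assert (hm3 : (3 <= m)%nat) by apply pow2_mul_ge3, hk.
  assert (HM : 0 < INR m) by (apply lt_0_INR; lia).
  assert (hmN : INR N <= INR m).
  { apply le_INR. unfold m. replace (S N - 1)%nat with N by lia. generalize (pow2_ge_S N). nia. }
  assert (hmd : 2 * (PI / INR m) < del).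
  { assert (2 * PI < del * INR m); [| apply Rmult_lt_reg_r with (INR m); auto; unfold Rdiv;
      rewrite Rmult_assoc, Rmult_assoc, Rinv_l; lra].
    apply Rmult_lt_reg_r with (/ del); [apply Rinv_0_lt_compat; auto |].
    replace (del * INR m * / del) with (INR m) by (field; lra). unfold Rdiv in hN. lra. }
  destruct (angle_bracket m th ltac:(lia) hth) as [s [hs [h1 h2]]].
  assert (hstep := angle_step m s ltac:(lia)).
  destruct (Hd (angle m s) ltac:(rewrite Rabs_left1; lra)) as [g1 g2].
  assert (HV := Hr (vertex a b p m s) g1 g2).
  assert (Hpoly : polygon a b p m (vertex a b p m s)) by (exists s; split; [auto | apply seg_left]).
  assert (Hn := limit_below_iterates (S N) ltac:(lia)).
  assert (Ho := Hproj (S N) ltac:(lia)). apply is_proj_sqdist in Ho as [_ Ho]. specialize (Ho _ Hpoly).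
  assert (sqdist xs (vertex a b p m s) - sqdist xs (curve a b p th) < eta)
    by (eapply Rle_lt_trans; [apply Rle_abs | exact HV]).
  lra.
Qed.

(* If [y] were inside [D_p], the segment from [y] to [xs] would cross [C_p] at a point
   strictly closer to [xs] than [y]. *)
Lemma limit_on_curve : F y = 1.
Proof.
  destruct limit_level_le1 as [h|h]; auto. exfalso.
  set (g := fun l => F (fst y + l * (fst xs - fst y), snd y + l * (snd xs - snd y)) - 1).
  assert (gc : continuity g)
    by (apply continuity_minus; [apply level_line_continuous | apply continuity_const; intros u v]; auto).
  assert (g0 : g 0 < 0) by (unfold g; rewrite !Rmult_0_l, !Rplus_0_r, <- surjective_pairing; lra).
  assert (g1 : 0 < g 1).
  { unfold g. rewrite !Rmult_1_l. replace (fst y + (fst xs - fst y)) with (fst xs) by ring.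
    replace (snd y + (snd xs - snd y)) with (snd xs) by ring. rewrite <- surjective_pairing. lra. }
  destruct (IVT g 0 1 gc ltac:(lra) g0 g1) as [c [hc gcz]].
  assert (c <> 0) by (intros ->; lra). assert (c <> 1) by (intros ->; lra).
  assert (HC := limit_min_on_curve (fst y + c * (fst xs - fst y), snd y + c * (snd xs - snd y))
                  ltac:(unfold g in gcz; lra)).
  replace (sqdist xs (fst y + c * (fst xs - fst y), snd y + c * (snd xs - snd y)))
    with ((1 - c) ^ 2 * sqdist xs y) in HC by (unfold sqdist; simpl; ring).
  assert (0 < sqdist xs y).
  { destruct (sqdist_ge0 xs y) as [h'|h']; auto.
    symmetry in h'. apply sqdist_eq0 in h'. rewrite h' in hxs. lra. }
  assert ((1 - c) ^ 2 < 1) by nra. nra.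
Qed.

Lemma limit_is_proj : is_proj (inC a b p) xs y.
Proof. apply is_proj_sqdist. split; [exact limit_on_curve | exact limit_min_on_curve]. Qed.

End Iterates.

End Polygon.

Theorem theorem4p3 (a b p : R) (xs : R * R) :
  0 < a -> 0 < b -> 1 < p ->
  (inD a b p xs -> is_proj (inD a b p) xs xs) /\
  (~ inD a b p xs ->
   forall (k : nat) (x : nat -> R * R),
     (3 <= k)%nat ->
     is_proj (polygon a b p k) xs (x 1%nat) ->
     (forall n, (1 <= n)%nat -> refine_step a b p (2 ^ (n - 1) * k) xs (x n) (x (S n))) ->
     exists y, is_proj (inC a b p) xs y /\ converges x y).
Proof.
  intros ha hb hp. split; [apply is_proj_self |].
  intros hnD k x hk hx1 Hstep.
  assert (hxs : 1 < level a b p xs) by (unfold inD in hnD; unfold level; lra).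
  assert (Hproj := iterates_proj a b p ha hb hp k xs x hk hxs hx1 Hstep).
  destruct (iterates_coord_converge a b p ha hb hp k hk xs hxs x Hproj) as [y Hy].
  exists y. split.
  - exact (limit_is_proj a b p ha hb hp k hk xs hxs x Hproj y Hy).
  - exact (converges_of_coord x y Hy).
Qed.
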